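(* Let $n,l_1,u_1,l_2,u_2$ be non-negative integers and $(f(k))$, $(g(k))$ complex sequences such that the polynomial identity \[ \sum_{k=l_1}^{u_1}f(k)t^k(1-t)^{n-k}=\sum_{k=l_2}^{u_2}g(k)t^k \] holds for all complex $t$. Let $r,s\in\mathbb{C}\setminus\mathbb{Z}^{-}$ with $s\neq0$ and $r-s\notin\mathbb{Z}^{-}$. Then \[ \sum_{k=l_1}^{u_1}\frac{f(k)}{(k+s)\binom{n+r}{k+s}}=\sum_{k=l_2}^{u_2}\frac{g(k)}{(k+s)\binom{k+r}{k+s}}, \] and \[ \sum_{k=l_1}^{u_1}f(k)\frac{H_{n-k+r-s}-H_{n+r}}{(k+s)\binom{n+r}{k+s}}=\sum_{k=l_2}^{u_2}g(k)\frac{H_{r-s}-H_{k+r}}{(k+s)\binom{k+r}{k+s}}. \]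
   Context: $\mathbb{Z}^{-}$ denotes the set of negative integers. For complex $z$ not a negative integer, $H_z=\psi(z+1)+\gamma$ ($\psi$ the digamma function, $\gamma$ Euler's constant). Binomial coefficients with complex entries: $\binom{x}{y}=\frac{\Gamma(x+1)}{\Gamma(y+1)\Gamma(x-y+1)}$. *)

From Stdlib Require Import Reals Factorial ClassicalEpsilon.
From Coquelicot Require Import Coquelicot.
Open Scope R_scope.

Definition Cnat (k : nat) : C := RtoC (INR k).

Definition not_neg_int (z : C) : Prop := forall m : nat, z <> Copp (Cnat (S m)).

Definition Cexp (z : C) : C :=
  (exp (Re z) * cos (Im z), exp (Re z) * sin (Im z)).

Definition Cnatpow (m : nat) (z : C) : C := Cexp (Cmult z (RtoC (ln (INR m)))).

(* limit of a complex sequence (chosen by epsilon; meaningful when it converges) *)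
Definition Clim (u : nat -> C) : C :=
  epsilon (inhabits (RtoC 0)) (fun l => filterlim u eventually (locally l)).

(* complex derivative (chosen by epsilon; meaningful when f is C-differentiable at z) *)
Definition Cderiv (f : C -> C) (z : C) : C :=
  epsilon (inhabits (RtoC 0))
    (fun l => @is_derive C_AbsRing C_NormedModule f z l).

Fixpoint Cpoch1 (z : C) (m : nat) : C :=
  match m with
  | O => z
  | S m' => Cmult (Cpoch1 z m') (Cplus z (Cnat m))
  end.

(* Euler--Gauss definition of the Gamma function on C \ {0,-1,-2,...}:
   Gamma z = lim_m  m! m^z / (z (z+1) ... (z+m)) *)
Definition CGamma (z : C) : C :=
  Clim (fun m => Cdiv (Cmult (Cnat (Factorial.fact m)) (Cnatpow m z)) (Cpoch1 z m)).

Definition euler_gamma : R :=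
  real (Lim_seq (fun n => sum_n_m (fun k => / INR k) 1 n - ln (INR n))).

Definition digamma (z : C) : C := Cdiv (Cderiv CGamma z) (CGamma z).

Definition Harm (z : C) : C := Cplus (digamma (Cplus z (RtoC 1))) (RtoC euler_gamma).

Definition Cbinom (x y : C) : C :=
  Cdiv (CGamma (Cplus x (RtoC 1)))
       (Cmult (CGamma (Cplus y (RtoC 1))) (CGamma (Cplus (Cminus x y) (RtoC 1)))).

(* Any [Psi] with [Psi k (m + 1) = Psi k m - Psi (k + 1) m] is the linear
   functional [X^j |-> Psi j 0] applied to [X^k (1 - X)^m], so the polynomial
   identity of the hypothesis transfers to
   [sum_k f k Psi k (n - k) = sum_k g k Psi k 0].  The weight
   [1 / ((k + s) C(k + m + r, k + s))] is such a [Psi]: it equals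
   [Gamma s Gamma (r - s + 1) / Gamma (r + 1)] times the beta ratio
   [(s)_k (r - s + 1)_m / (r + 1)_(k + m)].  The harmonic weight of the second
   identity is its logarithmic derivative in [r], again a solution of the
   recurrence.
   The facts [Gamma (z + 1) = z Gamma z] and [psi (z + 1) = psi z + 1 / z] are
   derived from the Euler-Gauss limit: for [Re z >= 1] the Gauss sequence and
   its derivative converge uniformly near [z], so Gamma is holomorphic there,
   and the functional equation carries this to every [z] off the nonpositive
   integers. *)

From Stdlib Require Import Reals Lra Lia Arith ClassicalEpsilon Factorial.
From Coquelicot Require Import Coquelicot.

Local Open Scope C_scope.

(* Finite sums become atoms and Coquelicot's ring operations on [C] are
   unfolded, so that [ring] sees a plain [C] ring equation. *)
Ltac ring_C :=
  match goal with |- @eq _ ?a ?b => change (@eq C a b) end;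
  repeat match goal with
    | |- context [@sum_n_m C_AbelianMonoid ?a ?n ?m] =>
        let X := fresh "X" in generalize (@sum_n_m C_AbelianMonoid a n m : C); intros X
    end;
  repeat change (@mult C_Ring ?a ?b) with (Cmult a b);
  repeat change (@plus C_AbelianMonoid ?a ?b) with (Cplus a b);
  ring.

Lemma Cnat_0 : Cnat 0 = 0.
Proof. reflexivity. Qed.

Lemma Cnat_S k : Cnat (S k) = Cnat k + 1.
Proof. unfold Cnat. rewrite S_INR, RtoC_plus. reflexivity. Qed.

Lemma Cnat_plus a b : Cnat (a + b) = Cnat a + Cnat b.
Proof. unfold Cnat. rewrite plus_INR, RtoC_plus. reflexivity. Qed.

Lemma Cnat_mult a b : Cnat (a * b) = Cnat a * Cnat b.
Proof. unfold Cnat. rewrite mult_INR, RtoC_mult. reflexivity. Qed.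

Lemma Cmod_Cnat k : Cmod (Cnat k) = INR k.
Proof. unfold Cnat. rewrite Cmod_R. apply Rabs_pos_eq, pos_INR. Qed.

Lemma Cnat_neq_0 k : (1 <= k)%nat -> Cnat k <> 0.
Proof.
  intros Hk E. unfold Cnat in E. apply RtoC_inj in E.
  apply (le_INR 1 k) in Hk. simpl in Hk. lra.
Qed.

Lemma Cinv_0 : / (RtoC 0) = 0.
Proof. unfold Cinv, RtoC; simpl. f_equal; unfold Rdiv; ring. Qed.

Lemma exists_nat_gt (r : R) : exists N : nat, (r < INR N)%R.
Proof. destruct (INR_archimed 1 r) as [N HN]; [lra|]. exists N. lra. Qed.

Lemma Cinv_mult (a b : C) : / (a * b) = / a * / b.
Proof.
  destruct (Ceq_dec a 0) as [->|Ha]; [rewrite Cmult_0_l, Cinv_0; ring|].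
  destruct (Ceq_dec b 0) as [->|Hb]; [rewrite Cmult_0_r, Cinv_0; ring|].
  field. auto.
Qed.

Lemma Cinv_inv (b : C) : / / b = b.
Proof. destruct (Ceq_dec b 0) as [->|Hb]; [rewrite !Cinv_0; reflexivity | field; auto]. Qed.

Lemma Cmult_eq_0_r (t q : C) : t <> 0 -> t * q = 0 -> q = 0.
Proof.
  intros Ht H. transitivity (/ t * (t * q)); [field; auto | rewrite H; ring].
Qed.

Lemma Cminus_eq_0 (a b : C) : a - b = 0 -> a = b.
Proof. intros H. rewrite <- (Cplus_0_l b), <- H. ring. Qed.

Lemma Csum_plus (a b : nat -> C) n m :
  sum_n_m (fun k => a k + b k) n m = sum_n_m a n m + sum_n_m b n m.
Proof. exact (sum_n_m_plus a b n m). Qed.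

Lemma Csum_scal_l (c : C) (a : nat -> C) n m :
  sum_n_m (fun k => c * a k) n m = c * sum_n_m a n m.
Proof. exact (@sum_n_m_mult_l C_Ring c a n m). Qed.

Lemma Csum_scal_r (c : C) (a : nat -> C) n m :
  sum_n_m (fun k => a k * c) n m = sum_n_m a n m * c.
Proof. exact (@sum_n_m_mult_r C_Ring c a n m). Qed.

Lemma Csum_minus (a b : nat -> C) n m :
  sum_n_m (fun k => a k - b k) n m = sum_n_m a n m - sum_n_m b n m.
Proof.
  transitivity (sum_n_m (fun k => a k + (-1) * b k) n m).
  { apply sum_n_m_ext; intros; unfold Cminus; ring_C. }
  rewrite Csum_plus, Csum_scal_l. unfold Cminus; ring_C.
Qed.

Lemma Csum_zero (a : nat -> C) n m :
  (forall k, (n <= k <= m)%nat -> a k = 0) -> sum_n_m a n m = (0 : C).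
Proof.
  intros H. rewrite (sum_n_m_ext_loc a (fun _ => zero)) by auto.
  exact (@sum_n_m_const_zero C_AbelianMonoid n m).
Qed.

Lemma Csum_exchange (a : nat -> nat -> C) l u l' u' :
  sum_n_m (fun k => sum_n_m (fun j => a k j) l' u') l u =
  sum_n_m (fun j => sum_n_m (fun k => a k j) l u) l' u'.
Proof.
  induction u as [|u IHu].
  - destruct l.
    + rewrite sum_n_n. apply sum_n_m_ext; intros; now rewrite sum_n_n.
    + rewrite sum_n_m_zero by lia. symmetry; apply Csum_zero; intros.
      apply Csum_zero; intros; lia.
  - destruct (le_lt_dec l (S u)).
    + rewrite sum_n_Sm by lia. rewrite IHu. rewrite <- Csum_plus.
      apply sum_n_m_ext; intros. rewrite sum_n_Sm; auto.
    + rewrite sum_n_m_zero by lia. symmetry; apply Csum_zero; intros.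
      apply Csum_zero; intros; lia.
Qed.

Lemma pow_n_S (t : C) j : @pow_n C_Ring t (S j) = t * @pow_n C_Ring t j.
Proof. reflexivity. Qed.

Lemma pow_n_0 (t : C) : @pow_n C_Ring t 0 = (1 : C).
Proof. reflexivity. Qed.

Lemma Cmod_pow_n (t : C) j : Cmod (@pow_n C_Ring t j) = (Cmod t ^ j)%R.
Proof.
  induction j as [|j IHj].
  - rewrite pow_n_0, Cmod_1. simpl; lra.
  - rewrite pow_n_S, Cmod_mult, IHj. simpl; lra.
Qed.

Lemma sum_pow_n_Sn (c : nat -> C) (t : C) N :
  sum_n_m (fun j => c j * @pow_n C_Ring t j) 0 (S N) =
  c 0%nat + t * sum_n_m (fun j => c (S j) * @pow_n C_Ring t j) 0 N.
Proof.
  rewrite sum_Sn_m by lia. rewrite <- sum_n_m_S, <- Csum_scal_l.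
  change (plus ?a ?b) with (Cplus a b). rewrite pow_n_0. f_equal.
  - ring_C.
  - apply sum_n_m_ext; intros; rewrite pow_n_S; ring_C.
Qed.

Lemma Rle_0_of_le_small_mult (a B : R) :
  (forall x, (0 < x <= 1)%R -> (a <= x * B)%R) -> (a <= 0)%R.
Proof.
  intros H. destruct (Rle_lt_dec a 0) as [|Ha]; auto.
  pose proof (H 1%R ltac:(lra)) as HB.
  set (x := (a / (2 * B))%R).
  assert (Hx : (0 < x <= 1)%R).
  { unfold x. split; [apply Rdiv_lt_0_compat; lra|].
    apply Rmult_le_reg_r with (2 * B)%R; [lra|].
    unfold Rdiv. rewrite Rmult_assoc, Rinv_l by lra. lra. }
  specialize (H x Hx). unfold x in H.
  replace (a / (2 * B) * B)%R with (a / 2)%R in H by (field; lra). lra.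
Qed.

Lemma poly_coeffs_zero N : forall c : nat -> C,
  (forall t : C, t <> 0 -> sum_n_m (fun j => c j * @pow_n C_Ring t j) 0 N = (0 : C)) ->
  forall j, (j <= N)%nat -> c j = 0.
Proof.
  induction N as [|N IHN]; intros c H j Hj.
  - assert (j = 0)%nat by lia; subst.
    specialize (H 1 ltac:(intro E; apply RtoC_inj in E; lra)).
    rewrite sum_n_n, pow_n_0 in H. rewrite <- H. ring_C.
  - assert (Hc0 : c 0%nat = 0).
    { apply Cmod_eq_0, Rle_antisym; [|apply Cmod_ge_0].
      apply (Rle_0_of_le_small_mult _ (sum_n_m (fun k => Cmod (c (S k))) 0 N)).
      intros x Hx. assert (Hx0 : RtoC x <> 0) by (intro E; apply RtoC_inj in E; lra).
      specialize (H x Hx0). rewrite sum_pow_n_Sn in H.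
      set (Q := sum_n_m (fun j => c (S j) * @pow_n C_Ring (RtoC x) j) 0 N) in H.
      replace (c 0%nat) with (- (RtoC x * Q)).
      2:{ change (c 0%nat + RtoC x * Q = 0) in H.
          rewrite <- (Cplus_0_l (- _)), <- H. ring. }
      rewrite Cmod_opp, Cmod_mult, Cmod_R, Rabs_pos_eq by lra.
      apply Rmult_le_compat_l; [lra|].
      eapply Rle_trans; [apply (@norm_sum_n_m C_AbsRing C_NormedModule)|].
      apply sum_n_m_le. intros k. change (norm ?z) with (Cmod z).
      rewrite Cmod_mult, Cmod_pow_n, Cmod_R, Rabs_pos_eq by lra.
      rewrite <- (Rmult_1_r (Cmod (c (S k)))) at 2.
      apply Rmult_le_compat_l; [apply Cmod_ge_0|].
      rewrite <- (pow1 k). apply pow_incr; lra. }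
    destruct j as [|j]; auto.
    apply (IHN (fun k => c (S k))); [|lia].
    intros t Ht. specialize (H t Ht). rewrite sum_pow_n_Sn, Hc0 in H.
    change (0 + t * sum_n_m (fun j => c (S j) * @pow_n C_Ring t j) 0 N = 0) in H.
    rewrite Cplus_0_l in H. exact (Cmult_eq_0_r _ _ Ht H).
Qed.

(** * The Bernstein transfer principle *)

Definition delta (k j : nat) : C := if Nat.eqb j k then 1 else 0.

(* On coefficient sequences, multiplication of a polynomial by [1 - X]. *)
Definition mul_1_minus_X (c : nat -> C) (j : nat) : C :=
  c j - match j with O => 0 | S j' => c j' end.

(* The coefficients of [X^k (1 - X)^m]. *)
Definition bernstein_coef (k m : nat) : nat -> C :=
  Nat.iter m mul_1_minus_X (delta k).

Definition bernstein_rec (Psi : nat -> nat -> C) : Prop :=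
  forall k m, Psi k (S m) = Psi k m - Psi (S k) m.

Lemma bernstein_rec_pow (t : C) :
  bernstein_rec (fun k m => @pow_n C_Ring t k * @pow_n C_Ring (1 - t) m).
Proof. intros k m. rewrite !pow_n_S. ring_C. Qed.

Lemma sum_delta (P : nat -> C) k N :
  (k <= N)%nat -> sum_n_m (fun j => delta k j * P j) 0 N = P k.
Proof.
  induction N as [|N IHN]; intros Hk.
  - assert (k = 0)%nat by lia; subst. rewrite sum_n_n. unfold delta; simpl; ring_C.
  - rewrite sum_n_Sm by lia. destruct (Nat.eq_dec k (S N)) as [->|Hne].
    + rewrite Csum_zero.
      * unfold delta. rewrite Nat.eqb_refl. ring_C.
      * intros j Hj. unfold delta. replace (Nat.eqb j (S N)) with false; [ring|].
        symmetry; apply Nat.eqb_neq; lia.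
    + rewrite IHN by lia. unfold delta. replace (Nat.eqb (S N) k) with false; [ring_C|].
      symmetry; apply Nat.eqb_neq; lia.
Qed.

Lemma bernstein_rec_expand m : forall k (Psi : nat -> nat -> C) N,
  bernstein_rec Psi -> (k + m <= N)%nat ->
  sum_n_m (fun j => bernstein_coef k m j * Psi j 0%nat) 0 N = Psi k m.
Proof.
  induction m as [|m IHm]; intros k Psi N HPsi HN.
  - apply (sum_delta (fun j => Psi j 0%nat)). lia.
  - destruct N as [|N]; [lia|].
    unfold bernstein_coef; simpl Nat.iter; fold (bernstein_coef k m).
    unfold mul_1_minus_X.
    transitivity (sum_n_m (fun j => bernstein_coef k m j * Psi j 0%nat) 0 (S N) -
      sum_n_m (fun j => match j with O => 0 | S j' => bernstein_coef k m j' end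
                        * Psi j 0%nat) 0 (S N)).
    { rewrite <- Csum_minus. apply sum_n_m_ext; intros; ring_C. }
    rewrite IHm by (auto; lia).
    rewrite sum_Sn_m, <- sum_n_m_S by lia.
    change (plus ?a ?b) with (Cplus a b).
    rewrite (IHm k (fun a b => Psi (S a) b) N); [| intros a b; apply HPsi | lia].
    rewrite HPsi. ring_C.
Qed.

Lemma sum_bernstein_expand (h : nat -> C) (deg : nat -> nat) l u N
    (Psi : nat -> nat -> C) :
  bernstein_rec Psi -> (forall k, (l <= k <= u)%nat -> (k + deg k <= N)%nat) ->
  sum_n_m (fun k => h k * Psi k (deg k)) l u =
  sum_n_m (fun j => sum_n_m (fun k => h k * bernstein_coef k (deg k) j) l u
                    * Psi j 0%nat) 0 N.
Proof.
  intros HPsi Hdeg.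
  transitivity (sum_n_m (fun k => sum_n_m (fun j =>
      h k * (bernstein_coef k (deg k) j * Psi j 0%nat)) 0 N) l u).
  { apply sum_n_m_ext_loc. intros k Hk. rewrite Csum_scal_l.
    rewrite bernstein_rec_expand; auto. }
  rewrite Csum_exchange. apply sum_n_m_ext. intros j.
  rewrite <- Csum_scal_r. apply sum_n_m_ext. intros k. ring_C.
Qed.

Theorem bernstein_transfer n l1 u1 l2 u2 (f g : nat -> C) (Hu1 : (u1 <= n)%nat)
  (Hid : forall t : C,
     sum_n_m (fun k => Cmult (Cmult (f k) (@pow_n C_Ring t k))
                             (@pow_n C_Ring (Cminus (RtoC 1) t) (n - k))) l1 u1
     = sum_n_m (fun k => Cmult (g k) (@pow_n C_Ring t k)) l2 u2)
  (Psi : nat -> nat -> C) :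
  bernstein_rec Psi ->
  sum_n_m (fun k => f k * Psi k (n - k)%nat) l1 u1 =
  sum_n_m (fun k => g k * Psi k 0%nat) l2 u2.
Proof.
  set (N := (n + u2)%nat).
  set (F j := sum_n_m (fun k => f k * bernstein_coef k (n - k) j) l1 u1).
  set (G j := sum_n_m (fun k => g k * bernstein_coef k 0 j) l2 u2).
  assert (Hexpand : forall Phi, bernstein_rec Phi ->
    sum_n_m (fun k => f k * Phi k (n - k)%nat) l1 u1 -
    sum_n_m (fun k => g k * Phi k 0%nat) l2 u2 =
    sum_n_m (fun j => (F j - G j) * Phi j 0%nat) 0 N).
  { intros Phi HPhi.
    rewrite (sum_bernstein_expand f (fun k => n - k)%nat l1 u1 N),
            (sum_bernstein_expand g (fun _ => 0%nat) l2 u2 N) by (auto; intros; lia).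
    rewrite <- Csum_minus. apply sum_n_m_ext; intros; unfold F, G; ring_C. }
  assert (HFG : forall j, (j <= N)%nat -> F j - G j = 0).
  { apply poly_coeffs_zero. intros t _.
    transitivity
      (sum_n_m (fun k => f k * (@pow_n C_Ring t k * @pow_n C_Ring (1 - t) (n - k))) l1 u1 -
       sum_n_m (fun k => g k * (@pow_n C_Ring t k * @pow_n C_Ring (1 - t) 0)) l2 u2).
    { rewrite (Hexpand _ (bernstein_rec_pow t)).
      apply sum_n_m_ext; intros; rewrite pow_n_0; ring_C. }
    specialize (Hid t).
    rewrite (sum_n_m_ext _ (fun k => f k * @pow_n C_Ring t k * @pow_n C_Ring (1 - t) (n - k))
      l1 u1) by (intros; ring_C).
    rewrite (sum_n_m_ext _ (fun k => g k * @pow_n C_Ring t k) l2 u2)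
      by (intros; rewrite pow_n_0; ring_C).
    change (Cminus (RtoC 1) t) with (1 - t) in Hid. rewrite Hid. ring_C. }
  intros HPsi. specialize (Hexpand Psi HPsi).
  rewrite (Csum_zero (fun j => (F j - G j) * Psi j 0%nat)) in Hexpand
    by (intros j Hj; rewrite HFG by lia; ring).
  exact (Cminus_eq_0 _ _ Hexpand).
Qed.

(** * Complex differentiation *)

Lemma Cmod_le_Re_Im (z : C) : (Cmod z <= Rabs (fst z) + Rabs (snd z))%R.
Proof.
  unfold Cmod. rewrite <- (sqrt_pow2 (Rabs (fst z) + Rabs (snd z))).
  2:{ pose proof (Rabs_pos (fst z)); pose proof (Rabs_pos (snd z)); lra. }
  apply sqrt_le_1_alt. rewrite <- (pow2_abs (fst z)), <- (pow2_abs (snd z)).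
  pose proof (Rabs_pos (fst z)); pose proof (Rabs_pos (snd z)). nra.
Qed.

Lemma Im_le_Cmod (z : C) : (Rabs (snd z) <= Cmod z)%R.
Proof.
  unfold Cmod. rewrite <- (sqrt_pow2 (Rabs (snd z))) by apply Rabs_pos.
  apply sqrt_le_1_alt. rewrite <- (pow2_abs (snd z)). pose proof (pow2_ge_0 (fst z)). lra.
Qed.

Lemma is_derive_eps {K : AbsRing} {V : NormedModule K} (f : K -> V) (z : K) (l : V) :
  is_derive f z l <->
  (forall eps, (0 < eps)%R -> exists del, (0 < del)%R /\
     forall y, (abs (minus y z) < del)%R ->
     (norm (minus (minus (f y) (f z)) (scal (minus y z) l)) <= eps * abs (minus y z))%R).
Proof.
  split.
  - intros [_ H] eps Heps.
    specialize (H z (fun P HP => HP) (mkposreal eps Heps)).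
    apply (@locally_le_locally_norm K (AbsRing_NormedModule K)) in H.
    destruct H as [d Hd]. exists (pos d). split; [apply cond_pos|]. exact Hd.
  - intros H. split; [apply is_linear_scal_l|].
    intros x Hx. apply (@is_filter_lim_locally_unique K (AbsRing_NormedModule K)) in Hx.
    subst x. intros eps. apply (@locally_norm_le_locally K (AbsRing_NormedModule K)).
    destruct (H (pos eps) (cond_pos eps)) as [d [Hd Hy]].
    exists (mkposreal d Hd). exact Hy.
Qed.

Notation is_Cderive f z l := (@is_derive C_AbsRing C_NormedModule f z l).

Lemma is_Cderive_eps (f : C -> C) z l :
  is_Cderive f z l <->
  (forall eps, (0 < eps)%R -> exists del, (0 < del)%R /\
     forall y, (Cmod (y - z) < del)%R ->
     (Cmod (f y - f z - (y - z) * l) <= eps * Cmod (y - z))%R).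
Proof. exact (is_derive_eps f z l). Qed.

(* Coquelicot's product and chain rules are stated over [C] viewed as a
   normed module over itself, a structure distinct from [C_NormedModule]. *)
Lemma is_Cderive_AbsRing (f : C -> C) z l :
  @is_derive C_AbsRing (AbsRing_NormedModule C_AbsRing) f z l <-> is_Cderive f z l.
Proof.
  rewrite is_Cderive_eps. exact (@is_derive_eps C_AbsRing (AbsRing_NormedModule C_AbsRing) f z l).
Qed.

Lemma is_Cderive_ext (f g : C -> C) z l l' :
  (forall y, f y = g y) -> l = l' -> is_Cderive f z l -> is_Cderive g z l'.
Proof. intros H <-. apply (is_derive_ext f g); auto. Qed.

Lemma is_Cderive_ext_loc (f g : C -> C) z l :
  (exists d, (0 < d)%R /\ forall y, (Cmod (y - z) < d)%R -> f y = g y) ->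
  is_Cderive f z l -> is_Cderive g z l.
Proof.
  intros [d [Hd E]] H. apply is_Cderive_eps. intros eps He.
  destruct (proj1 (is_Cderive_eps _ _ _) H eps He) as [d1 [Hd1 H1]].
  exists (Rmin d d1). split; [apply Rmin_glb_lt; auto|]. intros y Hy.
  assert (Hz : f z = g z).
  { apply E. replace (z - z) with (RtoC 0) by ring. rewrite Cmod_0. auto. }
  rewrite <- E, <- Hz.
  - apply H1. eapply Rlt_le_trans; [apply Hy | apply Rmin_r].
  - eapply Rlt_le_trans; [apply Hy | apply Rmin_l].
Qed.

Lemma is_Cderive_const (a z : C) : is_Cderive (fun _ => a) z (0 : C).
Proof. exact (@is_derive_const C_AbsRing C_NormedModule a z). Qed.

Lemma is_Cderive_id (z : C) : is_Cderive (fun y => y) z (1 : C).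
Proof.
  apply is_Cderive_eps. intros eps He. exists 1%R. split; [lra|]. intros y _.
  replace (y - z - (y - z) * 1) with (RtoC 0) by ring. rewrite Cmod_0.
  apply Rmult_le_pos; [lra | apply Cmod_ge_0].
Qed.

Lemma is_Cderive_plus f g z df dg :
  is_Cderive f z df -> is_Cderive g z dg -> is_Cderive (fun y => f y + g y) z (df + dg).
Proof. exact (@is_derive_plus C_AbsRing C_NormedModule f g z df dg). Qed.

Lemma is_Cderive_minus f g z df dg :
  is_Cderive f z df -> is_Cderive g z dg -> is_Cderive (fun y => f y - g y) z (df - dg).
Proof. exact (@is_derive_minus C_AbsRing C_NormedModule f g z df dg). Qed.

Lemma is_Cderive_mult f g z df dg :
  is_Cderive f z df -> is_Cderive g z dg ->
  is_Cderive (fun y => f y * g y) z (df * g z + f z * dg).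
Proof.
  intros Hf Hg. apply is_Cderive_AbsRing.
  apply (@is_derive_mult C_AbsRing); [apply is_Cderive_AbsRing; auto ..| apply Cmult_comm].
Qed.

Lemma is_Cderive_comp f g z df dg :
  is_Cderive f (g z) df -> is_Cderive g z dg -> is_Cderive (fun y => f (g y)) z (dg * df).
Proof.
  intros Hf Hg. exact (@is_derive_comp C_AbsRing C_NormedModule f g z df dg Hf
    (proj2 (is_Cderive_AbsRing _ _ _) Hg)).
Qed.

Lemma is_Cderive_Cinv (a : C) : a <> 0 -> is_Cderive Cinv a (- (/ a * / a)).
Proof.
  intros Ha. apply is_Cderive_eps. intros eps He.
  assert (Hm : (0 < Cmod a)%R) by (apply Cmod_gt_0; auto).
  exists (Rmin (Cmod a / 2) (eps * Cmod a ^ 3 / 2)). split.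
  { apply Rmin_glb_lt; [lra|]. apply Rdiv_lt_0_compat; [|lra].
    apply Rmult_lt_0_compat; auto. apply pow_lt; auto. }
  intros y Hy.
  assert (Hy1 : (Cmod (y - a) < Cmod a / 2)%R)
    by (eapply Rlt_le_trans; [apply Hy | apply Rmin_l]).
  assert (Hy2 : (Cmod (y - a) < eps * Cmod a ^ 3 / 2)%R)
    by (eapply Rlt_le_trans; [apply Hy | apply Rmin_r]).
  assert (Hyy : (Cmod a / 2 <= Cmod y)%R).
  { pose proof (Cmod_triangle y (a - y)) as T. replace (y + (a - y)) with a in T by ring.
    replace (a - y) with (- (y - a)) in T by ring. rewrite Cmod_opp in T. lra. }
  assert (Hy0 : y <> 0) by (intro E; subst; rewrite Cmod_0 in Hyy; lra).
  replace (/ y - / a - (y - a) * - (/ a * / a)) with ((y - a) * (y - a) * / (a * a * y))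
    by (field; auto).
  rewrite !Cmod_mult, Cmod_inv, !Cmod_mult by (repeat apply Cmult_neq_0; auto).
  pose proof (Cmod_ge_0 (y - a)).
  apply Rle_trans with
    (Cmod (y - a) * (eps * Cmod a ^ 3 / 2) * / (Cmod a * Cmod a * (Cmod a / 2)))%R.
  - apply Rmult_le_compat; try lra.
    + apply Rmult_le_pos; auto.
    + left. apply Rinv_0_lt_compat. repeat apply Rmult_lt_0_compat; auto.
      apply Cmod_gt_0; auto.
    + apply Rmult_le_compat_l; lra.
    + apply Rinv_le_contravar; [repeat apply Rmult_lt_0_compat; lra|].
      apply Rmult_le_compat_l; [apply Rmult_le_pos|]; lra.
  - right. field. lra.
Qed.

(* The mean value inequality on the real and imaginary parts separately,
   hence the factor 2. *)
Lemma Cmod_sub_le_deriv (phi dphi : R -> C) (M : R) :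
  (forall t, (Rabs t <= 1)%R ->
     is_derive (fun t => fst (phi t)) t (fst (dphi t)) /\
     is_derive (fun t => snd (phi t)) t (snd (dphi t)) /\ (Cmod (dphi t) <= M)%R) ->
  (Cmod (phi 1%R - phi 0%R) <= 2 * M)%R.
Proof.
  intros H.
  assert (Hpr : forall pr : C -> R, (forall u, Rabs (pr u) <= Cmod u)%R ->
     (forall t, (Rabs t <= 1)%R -> is_derive (fun t => pr (phi t)) t (pr (dphi t))) ->
     (Rabs (pr (phi 1%R) - pr (phi 0%R)) <= M)%R).
  { intros pr Hb Hd.
    pose proof (bounded_variation (fun t => pr (phi t)) (fun t => pr (dphi t)) M 0 1) as BV.
    rewrite Rminus_0_r, Rabs_R1, Rmult_1_r in BV. apply BV.
    intros t Ht. rewrite Rminus_0_r in Ht. split; [apply Hd; auto|].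
    eapply Rle_trans; [apply Hb | apply H; auto]. }
  eapply Rle_trans; [apply Cmod_le_Re_Im|]. simpl.
  rewrite <- !Rminus_def.
  pose proof (Hpr fst re_le_Cmod (fun t Ht => proj1 (H t Ht))).
  pose proof (Hpr snd Im_le_Cmod (fun t Ht => proj1 (proj2 (H t Ht)))). lra.
Qed.

Lemma is_derive_proj_segment (pr : C -> R)
  (Hsub : forall u v, pr (u - v) = (pr u - pr v)%R)
  (Hscal : forall r u, pr (RtoC r * u) = (r * pr u)%R)
  (Hb : forall u, (Rabs (pr u) <= Cmod u)%R)
  (phi : C -> C) (L z d : C) (t : R) :
  is_Cderive phi (z + RtoC t * d) L ->
  is_derive (fun s : R => pr (phi (z + RtoC s * d))) t (pr (L * d)).
Proof.
  intros H0. apply (is_derive_eps (K := R_AbsRing) (V := R_NormedModule)).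
  intros eps He. pose proof (Cmod_ge_0 d).
  destruct (proj1 (is_Cderive_eps _ _ _) H0 (eps / (Cmod d + 1))%R) as [del [Hdel Hd]].
  { apply Rdiv_lt_0_compat; lra. }
  exists (del / (Cmod d + 1))%R. split; [apply Rdiv_lt_0_compat; lra|].
  intros y Hy. change (abs (minus y t)) with (Rabs (y - t)) in Hy |- *.
  assert (E : z + RtoC y * d - (z + RtoC t * d) = RtoC (y - t) * d)
    by (rewrite RtoC_minus; ring).
  assert (Hc : (Cmod (z + RtoC y * d - (z + RtoC t * d)) < del)%R).
  { rewrite E, Cmod_mult, Cmod_R.
    apply Rle_lt_trans with (Rabs (y - t) * (Cmod d + 1))%R.
    - apply Rmult_le_compat_l; [apply Rabs_pos | lra].
    - apply Rmult_lt_reg_r with (/ (Cmod d + 1))%R; [apply Rinv_0_lt_compat; lra|].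
      rewrite Rmult_assoc, Rinv_r, Rmult_1_r by lra. apply Hy. }
  specialize (Hd _ Hc). rewrite E in Hd.
  change (norm ?x) with (Rabs x).
  change (Rabs (minus (minus ?a ?b) (scal (minus y t) ?c)) <= _)%R
    with (Rabs (a - b - (y - t) * c) <= eps * Rabs (y - t))%R.
  replace (pr (phi (z + RtoC y * d)%C) - pr (phi (z + RtoC t * d)%C) - (y - t) * pr (L * d)%C)%R
    with (pr (phi (z + RtoC y * d) - phi (z + RtoC t * d) - RtoC (y - t) * d * L)).
  2:{ rewrite !Hsub, <- Hscal. do 2 f_equal. ring. }
  eapply Rle_trans; [apply Hb|]. eapply Rle_trans; [apply Hd|].
  rewrite Cmod_mult, Cmod_R.
  apply Rle_trans with (eps / (Cmod d + 1) * (Rabs (y - t) * (Cmod d + 1)))%R.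
  - apply Rmult_le_compat_l; [left; apply Rdiv_lt_0_compat; lra|].
    apply Rmult_le_compat_l; [apply Rabs_pos | lra].
  - right. field. lra.
Qed.

Lemma Cmod_mean_value (phi dphi : C -> C) (z w : C) (M : R) :
  (forall t : R, (Rabs t <= 1)%R ->
     is_Cderive phi (z + RtoC t * (w - z)) (dphi (z + RtoC t * (w - z))) /\
     (Cmod (dphi (z + RtoC t * (w - z))%C) <= M)%R) ->
  (Cmod (phi w - phi z)%C <= 2 * M * Cmod (w - z))%R.
Proof.
  intros H.
  replace (phi w - phi z) with
    (phi (z + RtoC 1 * (w - z)) - phi (z + RtoC 0 * (w - z))) by (f_equal; f_equal; ring).
  rewrite Rmult_assoc.
  apply (Cmod_sub_le_deriv (fun t => phi (z + RtoC t * (w - z)))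
                           (fun t => dphi (z + RtoC t * (w - z)) * (w - z))).
  intros t Ht. destruct (H t Ht) as [Hd HM]. split; [|split].
  - apply (is_derive_proj_segment fst); auto; [intros; simpl; ring .. | apply re_le_Cmod].
  - apply (is_derive_proj_segment snd); auto; [intros; simpl; ring .. | apply Im_le_Cmod].
  - rewrite Cmod_mult. apply Rmult_le_compat_r; auto. apply Cmod_ge_0.
Qed.

Lemma Cexp_add a b : Cexp (a + b) = Cexp a * Cexp b.
Proof.
  destruct a as [x1 y1], b as [x2 y2]. unfold Cexp, Cmult, Cplus, Re, Im; simpl.
  rewrite exp_plus, cos_plus, sin_plus. f_equal; ring.
Qed.

Lemma Cmod_Cexp z : Cmod (Cexp z) = exp (fst z).
Proof.
  destruct z as [x y]. unfold Cmod, Cexp, Re, Im; cbn [fst snd].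
  replace ((exp x * cos y) ^ 2 + (exp x * sin y) ^ 2)%R with (exp x ^ 2)%R.
  - apply sqrt_pow2. apply Rlt_le, exp_pos.
  - rewrite <- (Rmult_1_r (exp x ^ 2)), <- (sin2_cos2 y). unfold Rsqr. ring.
Qed.

Lemma Cexp_RtoC (x : R) : Cexp (RtoC x) = RtoC (exp x).
Proof. unfold Cexp, RtoC, Re, Im; simpl. rewrite cos_0, sin_0. f_equal; ring. Qed.

Lemma is_derive_Cexp_ray (u : C) (t : R) :
  is_derive (fun t => fst (Cexp (RtoC t * u))) t (fst (u * Cexp (RtoC t * u))) /\
  is_derive (fun t => snd (Cexp (RtoC t * u))) t (snd (u * Cexp (RtoC t * u))).
Proof.
  destruct u as [a b]. unfold Cexp, Re, Im; simpl.
  split; auto_derive; auto; unfold Rminus; ring.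
Qed.

Lemma Cmod_Cexp_ray_le (u : C) (t : R) :
  (Cmod u <= 1)%R -> (Rabs t <= 1)%R -> (Cmod (Cexp (RtoC t * u)) <= 3)%R.
Proof.
  intros Hu Ht. rewrite Cmod_Cexp. apply Rle_trans with (exp 1); [|apply exp_le_3].
  assert (Hre : (fst (RtoC t * u)%C <= 1)%R).
  { eapply Rle_trans; [apply Rle_abs|]. eapply Rle_trans; [apply re_le_Cmod|].
    rewrite Cmod_mult, Cmod_R. rewrite <- (Rmult_1_r 1).
    apply Rmult_le_compat; auto; [apply Rabs_pos | apply Cmod_ge_0]. }
  destruct Hre as [Hlt | ->]; [left; apply exp_increasing; auto | lra].
Qed.

Lemma Cmod_Cexp_sub_1_le u : (Cmod u <= 1)%R -> (Cmod (Cexp u - 1) <= 6 * Cmod u)%R.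
Proof.
  intros Hu.
  replace (Cexp u - 1) with (Cexp (RtoC 1 * u) - Cexp (RtoC 0 * u)).
  2:{ rewrite Cmult_0_l, Cmult_1_l, Cexp_RtoC, exp_0. reflexivity. }
  replace (6 * Cmod u)%R with (2 * (3 * Cmod u))%R by ring.
  apply (Cmod_sub_le_deriv (fun t => Cexp (RtoC t * u)) (fun t => u * Cexp (RtoC t * u))).
  intros t Ht. destruct (is_derive_Cexp_ray u t) as [Hfst Hsnd]. split; [|split]; auto.
  rewrite Cmod_mult, Rmult_comm. apply Rmult_le_compat_r; [apply Cmod_ge_0|].
  apply Cmod_Cexp_ray_le; auto.
Qed.

Lemma Cmod_Cexp_taylor_le u : (Cmod u <= 1)%R -> (Cmod (Cexp u - 1 - u) <= 12 * Cmod u ^ 2)%R.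
Proof.
  intros Hu.
  replace (Cexp u - 1 - u) with
    ((Cexp (RtoC 1 * u) - RtoC 1 * u) - (Cexp (RtoC 0 * u) - RtoC 0 * u)).
  2:{ rewrite Cmult_0_l, Cmult_1_l, Cexp_RtoC, exp_0. ring. }
  replace (12 * Cmod u ^ 2)%R with (2 * (6 * Cmod u ^ 2))%R by ring.
  apply (Cmod_sub_le_deriv (fun t => Cexp (RtoC t * u) - RtoC t * u)
                           (fun t => u * (Cexp (RtoC t * u) - 1))).
  intros t Ht. split; [|split].
  1,2: destruct u as [a b]; unfold Cexp, Re, Im; simpl;
       auto_derive; auto; unfold Rminus; ring.
  assert (Htu : (Cmod (RtoC t * u) <= Cmod u)%R).
  { rewrite Cmod_mult, Cmod_R. pose proof (Cmod_ge_0 u).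
    pose proof (Rabs_pos t). nra. }
  pose proof (Cmod_Cexp_sub_1_le (RtoC t * u) ltac:(lra)).
  pose proof (Cmod_ge_0 u). rewrite Cmod_mult. nra.
Qed.

Lemma is_Cderive_Cexp z : is_Cderive Cexp z (Cexp z).
Proof.
  apply is_Cderive_eps. intros eps He.
  pose proof (exp_pos (fst z)) as Hp.
  exists (Rmin 1 (eps / (12 * exp (fst z))))%R.
  split; [apply Rmin_glb_lt; [lra | apply Rdiv_lt_0_compat; lra]|].
  intros y Hy.
  assert (Hy1 : (Cmod (y - z) <= 1)%R) by (pose proof (Rmin_l 1 (eps / (12 * exp (fst z)))); lra).
  assert (Hy2 : (12 * exp (fst z) * Cmod (y - z) <= eps)%R).
  { pose proof (Rmin_r 1 (eps / (12 * exp (fst z)))).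
    apply Rmult_le_reg_r with (/ (12 * exp (fst z)))%R; [apply Rinv_0_lt_compat; lra|].
    replace (12 * exp (fst z) * Cmod (y - z) * / (12 * exp (fst z)))%R with (Cmod (y - z))
      by (field; lra). lra. }
  replace (Cexp y - Cexp z - (y - z) * Cexp z) with (Cexp z * (Cexp (y - z) - 1 - (y - z))).
  2:{ assert (Ey : Cexp y = Cexp z * Cexp (y - z)) by (rewrite <- Cexp_add; f_equal; ring).
      rewrite Ey. ring. }
  rewrite Cmod_mult, Cmod_Cexp.
  pose proof (Cmod_Cexp_taylor_le (y - z) Hy1). pose proof (Cmod_ge_0 (y - z)).
  apply Rle_trans with (exp (fst z) * (12 * Cmod (y - z) ^ 2))%R.
  - apply Rmult_le_compat_l; lra.
  - replace (exp (fst z) * (12 * Cmod (y - z) ^ 2))%R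
      with (12 * exp (fst z) * Cmod (y - z) * Cmod (y - z))%R by ring.
    apply Rmult_le_compat_r; auto.
Qed.

(** * Limits of complex sequences *)

Definition Cseq_lim (u : nat -> C) (l : C) : Prop :=
  forall eps, (0 < eps)%R -> exists N, forall n, (N <= n)%nat -> (Cmod (u n - l) < eps)%R.

Lemma Cseq_lim_filterlim u l : Cseq_lim u l <-> filterlim u eventually (locally l).
Proof.
  split.
  - intros H P HP.
    destruct (@locally_norm_le_locally C_AbsRing C_NormedModule l P HP) as [e He].
    destruct (H e (cond_pos e)) as [N HN].
    exists N. intros n Hn. apply He. apply HN; auto.
  - intros H eps He.
    assert (Hl : locally l (fun y : C => (Cmod (y - l) < eps)%R)).
    { apply (@locally_le_locally_norm C_AbsRing C_NormedModule).
      exists (mkposreal eps He). intros y Hy. apply Hy. }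
    destruct (H _ Hl) as [N HN]. exists N. auto.
Qed.

Lemma Cseq_lim_unique u l1 l2 : Cseq_lim u l1 -> Cseq_lim u l2 -> l1 = l2.
Proof.
  intros H1 H2. destruct (Ceq_dec l1 l2) as [e|n]; auto. exfalso.
  assert (Hp : (0 < Cmod (l1 - l2))%R).
  { apply Cmod_gt_0. intro E. apply n. apply Cminus_eq_0. exact E. }
  destruct (H1 _ (Rdiv_lt_0_compat _ 2 Hp ltac:(lra))) as [N1 HN1].
  destruct (H2 _ (Rdiv_lt_0_compat _ 2 Hp ltac:(lra))) as [N2 HN2].
  specialize (HN1 (N1 + N2)%nat ltac:(lia)). specialize (HN2 (N1 + N2)%nat ltac:(lia)).
  pose proof (Cmod_triangle (l1 - u (N1 + N2)%nat) (u (N1 + N2)%nat - l2)) as T.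
  replace (l1 - u (N1 + N2)%nat + (u (N1 + N2)%nat - l2)) with (l1 - l2) in T by ring.
  replace (l1 - u (N1 + N2)%nat) with (- (u (N1 + N2)%nat - l1)) in T by ring.
  rewrite Cmod_opp in T. lra.
Qed.

Lemma Clim_correct u l : Cseq_lim u l -> Clim u = l.
Proof.
  intros H. unfold Clim.
  assert (Ex : exists l, filterlim u eventually (locally l))
    by (exists l; apply Cseq_lim_filterlim; auto).
  pose proof (epsilon_spec (inhabits (RtoC 0)) _ Ex) as Hs.
  apply Cseq_lim_filterlim in Hs. eapply Cseq_lim_unique; eauto.
Qed.

Lemma Cderiv_correct f z l : is_Cderive f z l -> Cderiv f z = l.
Proof.
  intros H. unfold Cderiv.
  pose proof (epsilon_spec (inhabits (RtoC 0)) (fun l => is_Cderive f z l)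
    (ex_intro _ l H)) as Hs.
  rewrite <- (is_C_derive_unique f z _ Hs). apply is_C_derive_unique. auto.
Qed.

Lemma Cseq_lim_const (c : C) : Cseq_lim (fun _ => c) c.
Proof.
  intros eps He. exists 0%nat. intros.
  replace (c - c) with (RtoC 0) by ring. rewrite Cmod_0. auto.
Qed.

Lemma Cseq_lim_minus a b A B :
  Cseq_lim a A -> Cseq_lim b B -> Cseq_lim (fun n => a n - b n) (A - B).
Proof.
  intros Ha Hb eps He.
  destruct (Ha (eps / 2)%R ltac:(lra)) as [N1 H1].
  destruct (Hb (eps / 2)%R ltac:(lra)) as [N2 H2].
  exists (N1 + N2)%nat. intros n Hn.
  replace (a n - b n - (A - B)) with ((a n - A) - (b n - B)) by ring.
  eapply Rle_lt_trans; [unfold Cminus at 1; apply Cmod_triangle|]. rewrite Cmod_opp.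
  specialize (H1 n ltac:(lia)). specialize (H2 n ltac:(lia)). lra.
Qed.

Lemma Cseq_lim_mult a b A B :
  Cseq_lim a A -> Cseq_lim b B -> Cseq_lim (fun n => a n * b n) (A * B).
Proof.
  intros Ha Hb eps He.
  pose proof (Cmod_ge_0 A). pose proof (Cmod_ge_0 B).
  set (eA := Rmin 1 (eps / (2 * (Cmod A + 1)))).
  destruct (Hb eA) as [N1 H1].
  { apply Rmin_glb_lt; [lra | apply Rdiv_lt_0_compat; lra]. }
  destruct (Ha (eps / (2 * (Cmod B + 1)))%R) as [N2 H2]; [apply Rdiv_lt_0_compat; lra|].
  exists (N1 + N2)%nat. intros n Hn.
  specialize (H1 n ltac:(lia)). specialize (H2 n ltac:(lia)).
  pose proof (Rmin_l 1 (eps / (2 * (Cmod A + 1)))).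
  pose proof (Rmin_r 1 (eps / (2 * (Cmod A + 1)))). fold eA in H3, H4.
  replace (a n * b n - A * B) with ((a n - A) * b n + A * (b n - B)) by ring.
  eapply Rle_lt_trans; [apply Cmod_triangle|]. rewrite !Cmod_mult.
  assert (Hbn : (Cmod (b n) <= Cmod B + 1)%R).
  { pose proof (Cmod_triangle (b n - B) B) as T. replace (b n - B + B) with (b n) in T by ring.
    lra. }
  assert (Cmod (a n - A) * Cmod (b n) < eps / 2)%R.
  { apply Rle_lt_trans with (Cmod (a n - A) * (Cmod B + 1))%R.
    - apply Rmult_le_compat_l; [apply Cmod_ge_0 | lra].
    - replace (eps / 2)%R with (eps / (2 * (Cmod B + 1)) * (Cmod B + 1))%R by (field; lra).
      apply Rmult_lt_compat_r; lra. }
  assert (Cmod A * Cmod (b n - B) <= eps / 2)%R.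
  { replace (eps / 2)%R with ((Cmod A + 1) * (eps / (2 * (Cmod A + 1))))%R by (field; lra).
    apply Rmult_le_compat; try apply Cmod_ge_0; lra. }
  lra.
Qed.

Lemma Cseq_lim_ext_eventually u v l N :
  (forall n, (N <= n)%nat -> u n = v n) -> Cseq_lim u l -> Cseq_lim v l.
Proof.
  intros E H eps He. destruct (H eps He) as [N1 H1]. exists (N + N1)%nat. intros n Hn.
  rewrite <- E by lia. apply H1; lia.
Qed.

Lemma Cseq_lim_shift u l m0 : Cseq_lim u l -> Cseq_lim (fun k => u (k + m0)%nat) l.
Proof. intros H eps He. destruct (H eps He) as [N HN]. exists N. intros n Hn. apply HN. lia. Qed.

Lemma Cmod_le_of_Cseq_lim a A N c :
  Cseq_lim a A -> (forall n, (N <= n)%nat -> (Cmod (a n) <= c)%R) -> (Cmod A <= c)%R.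
Proof.
  intros Ha Hb. destruct (Rle_lt_dec (Cmod A) c) as [|Hlt]; auto. exfalso.
  destruct (Ha (Cmod A - c)%R ltac:(lra)) as [N1 H1].
  specialize (H1 (N + N1)%nat ltac:(lia)). specialize (Hb (N + N1)%nat ltac:(lia)).
  pose proof (Cmod_triangle (a (N + N1)%nat) (A - a (N + N1)%nat)) as T.
  replace (a (N + N1)%nat + (A - a (N + N1)%nat)) with A in T by ring.
  replace (A - a (N + N1)%nat) with (- (a (N + N1)%nat - A)) in T by ring.
  rewrite Cmod_opp in T. lra.
Qed.

Lemma Cseq_cauchy_lim (u : nat -> C) :
  (forall eps, (0 < eps)%R -> exists N, forall p q, (N <= p)%nat -> (N <= q)%nat ->
     (Cmod (u p - u q) <= eps)%R) ->
  exists l, Cseq_lim u l.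
Proof.
  intros H.
  assert (Hpr : forall pr : C -> R, (forall a b, pr (a - b) = (pr a - pr b)%R) ->
     (forall a, (Rabs (pr a) <= Cmod a)%R) -> { l | Un_cv (fun n => pr (u n)) l }).
  { intros pr Hl Hb. apply Rcomplete.R_complete. intros eps He.
    destruct (H (eps / 2)%R ltac:(lra)) as [N HN]. exists N. intros p q Hp Hq.
    unfold R_dist. rewrite <- Hl. eapply Rle_lt_trans; [apply Hb|].
    eapply Rle_lt_trans; [apply HN; auto | lra]. }
  destruct (Hpr fst) as [l1 H1]; [intros; simpl; ring | apply re_le_Cmod |].
  destruct (Hpr snd) as [l2 H2]; [intros; simpl; ring | apply Im_le_Cmod |].
  exists (l1, l2). intros eps He.
  destruct (H1 (eps / 2)%R ltac:(lra)) as [N1 HN1].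
  destruct (H2 (eps / 2)%R ltac:(lra)) as [N2 HN2].
  exists (N1 + N2)%nat. intros n Hn. eapply Rle_lt_trans; [apply Cmod_le_Re_Im|].
  specialize (HN1 n ltac:(lia)). specialize (HN2 n ltac:(lia)). unfold R_dist in *. simpl.
  rewrite <- !Rminus_def. lra.
Qed.

Section UniformLimit.

Variables (h dh : nat -> C -> C) (F : C -> C) (z0 : C) (del : R).
Hypothesis Hd : forall m w, (Cmod (w - z0) < del)%R -> is_Cderive (h m) w (dh m w).
Hypothesis Hl : forall w, (Cmod (w - z0) < del)%R -> Cseq_lim (fun m => h m w) (F w).

Lemma Cmod_lim_sub_le N e y :
  (forall p w, (N <= p)%nat -> (Cmod (w - z0) < del)%R -> (Cmod (dh p w - dh N w) <= e)%R) ->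
  (Cmod (y - z0) < del)%R ->
  (Cmod ((F y - h N y) - (F z0 - h N z0)) <= 2 * e * Cmod (y - z0))%R.
Proof.
  intros HN Hy. pose proof (Cmod_ge_0 (y - z0)).
  assert (Hz0 : (Cmod (z0 - z0) < del)%R)
    by (replace (z0 - z0) with (RtoC 0) by ring; rewrite Cmod_0; lra).
  apply (Cmod_le_of_Cseq_lim (fun p => (h p y - h N y) - (h p z0 - h N z0)) _ N).
  - apply Cseq_lim_minus; apply Cseq_lim_minus; auto; apply Cseq_lim_const.
  - intros p Hp.
    apply (Cmod_mean_value (fun v => h p v - h N v) (fun v => dh p v - dh N v) z0 y e).
    intros t Ht.
    assert (Hin : (Cmod (z0 + RtoC t * (y - z0) - z0) < del)%R).
    { replace (z0 + RtoC t * (y - z0) - z0) with (RtoC t * (y - z0)) by ring.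
      rewrite Cmod_mult, Cmod_R. eapply Rle_lt_trans; [|apply Hy].
      rewrite <- (Rmult_1_l (Cmod (y - z0))) at 2. apply Rmult_le_compat_r; auto. }
    split; [apply is_Cderive_minus; apply Hd; auto | apply HN; auto].
Qed.

Lemma is_Cderive_unif_lim : (0 < del)%R ->
  (forall eps, (0 < eps)%R -> exists N, forall p q w, (N <= p)%nat -> (N <= q)%nat ->
      (Cmod (w - z0) < del)%R -> (Cmod (dh p w - dh q w) <= eps)%R) ->
  exists L, is_Cderive F z0 L.
Proof.
  intros Hdel Hu.
  assert (Hz0 : (Cmod (z0 - z0) < del)%R)
    by (replace (z0 - z0) with (RtoC 0) by ring; rewrite Cmod_0; lra).
  destruct (Cseq_cauchy_lim (fun m => dh m z0)) as [L HL].
  { intros eps He. destruct (Hu eps He) as [N HN]. exists N. intros p q Hp Hq. apply HN; auto. }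
  exists L. apply is_Cderive_eps. intros eps He.
  set (e := (eps / 4)%R). assert (He' : (0 < e)%R) by (unfold e; lra).
  destruct (Hu e He') as [N HN].
  destruct (proj1 (is_Cderive_eps _ _ _) (Hd N z0 Hz0) e He') as [d1 [Hd1 HD1]].
  exists (Rmin del d1). split; [apply Rmin_glb_lt; auto|]. intros y Hy.
  assert (Hyd : (Cmod (y - z0) < del)%R) by (eapply Rlt_le_trans; [apply Hy | apply Rmin_l]).
  assert (Hyd1 : (Cmod (y - z0) < d1)%R) by (eapply Rlt_le_trans; [apply Hy | apply Rmin_r]).
  pose proof (Cmod_ge_0 (y - z0)).
  pose proof (Cmod_lim_sub_le N e y (fun p w Hp Hw => HN p N w Hp (le_n N) Hw) Hyd).
  assert (HLN : (Cmod (dh N z0 - L) <= e)%R).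
  { apply (Cmod_le_of_Cseq_lim (fun p => dh N z0 - dh p z0) _ N).
    - apply Cseq_lim_minus; auto. apply Cseq_lim_const.
    - intros p Hp. apply HN; auto. }
  specialize (HD1 y Hyd1).
  replace (F y - F z0 - (y - z0) * L) with
    (((F y - h N y) - (F z0 - h N z0)) + (h N y - h N z0 - (y - z0) * dh N z0)
     + (y - z0) * (dh N z0 - L)) by ring.
  eapply Rle_trans; [apply Cmod_triangle|].
  eapply Rle_trans; [apply Rplus_le_compat_r, Cmod_triangle|].
  rewrite Cmod_mult.
  assert (Cmod (y - z0) * Cmod (dh N z0 - L) <= Cmod (y - z0) * e)%R
    by (apply Rmult_le_compat_l; auto).
  unfold e in *. lra.
Qed.

End UniformLimit.

(** * The Gauss sequence *)

Lemma Cnatpow_plus_1 m z : (1 <= m)%nat -> Cnatpow m (z + 1) = Cnatpow m z * Cnat m.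
Proof.
  intros Hm. unfold Cnatpow.
  replace ((z + 1) * RtoC (ln (INR m))) with (z * RtoC (ln (INR m)) + RtoC (ln (INR m)))
    by ring.
  rewrite Cexp_add, Cexp_RtoC, exp_ln; [reflexivity|].
  apply (lt_INR 0 m). lia.
Qed.

Lemma Cnatpow_S m z :
  Cnatpow (S m) z = Cnatpow m z * Cexp (z * RtoC (ln (INR (S m)) - ln (INR m))).
Proof. unfold Cnatpow. rewrite <- Cexp_add. f_equal. rewrite RtoC_minus. ring. Qed.

Lemma Cmod_Cnatpow m z : Cmod (Cnatpow m z) = exp (fst z * ln (INR m)).
Proof. unfold Cnatpow. rewrite Cmod_Cexp. simpl. f_equal. ring. Qed.

Lemma Cpoch1_S z m : Cpoch1 z (S m) = Cpoch1 z m * (z + Cnat (S m)).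
Proof. reflexivity. Qed.

Lemma Cpoch1_plus_1 z m : Cpoch1 (z + 1) m * z = Cpoch1 z m * (z + Cnat (S m)).
Proof.
  induction m as [|m IHm].
  - simpl. unfold Cnat. simpl. ring.
  - rewrite !Cpoch1_S.
    transitivity (Cpoch1 (z + 1) m * z * (z + 1 + Cnat (S m))); [ring|].
    rewrite IHm, (Cnat_S (S m)). ring.
Qed.

Definition gauss_seq (m : nat) (z : C) : C :=
  Cdiv (Cmult (Cnat (fact m)) (Cnatpow m z)) (Cpoch1 z m).

Lemma CGamma_gauss z : CGamma z = Clim (fun m => gauss_seq m z).
Proof. reflexivity. Qed.

Definition gauss_conv (z : C) : Prop := exists l, Cseq_lim (fun m => gauss_seq m z) l.

Lemma gauss_conv_CGamma z : gauss_conv z -> Cseq_lim (fun m => gauss_seq m z) (CGamma z).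
Proof. intros [l Hl]. rewrite CGamma_gauss, (Clim_correct _ l Hl). exact Hl. Qed.

Lemma gauss_seq_plus_1 m (w : C) : (1 <= m)%nat -> w <> 0 -> w + Cnat (S m) <> 0 ->
  gauss_seq m (w + 1) = gauss_seq m w * (Cnat m * w / (w + Cnat (S m))).
Proof.
  intros Hm Hw HwS. unfold gauss_seq, Cdiv. rewrite Cnatpow_plus_1 by auto.
  pose proof (Cpoch1_plus_1 w m) as E.
  destruct (Ceq_dec (Cpoch1 w m) 0) as [P0|P0].
  - rewrite P0, Cmult_0_l in E.
    assert (P1 : Cpoch1 (w + 1) m = 0).
    { transitivity (Cpoch1 (w + 1) m * w * / w); [field; auto | rewrite E; ring]. }
    rewrite P1, P0, Cinv_0. ring.
  - assert (P1 : Cpoch1 (w + 1) m = Cpoch1 w m * (w + Cnat (S m)) / w)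
      by (rewrite <- E; field; auto).
    rewrite P1. field. repeat split; auto.
Qed.

Lemma Cmod_plus_Cnat_S_ge (w : C) m : (INR (S m) - Cmod w <= Cmod (w + Cnat (S m)))%R.
Proof.
  pose proof (Cmod_triangle (w + Cnat (S m)) (- w)) as T.
  replace (w + Cnat (S m) + - w) with (Cnat (S m)) in T by ring.
  rewrite Cmod_opp, Cmod_Cnat in T. lra.
Qed.

Lemma eventually_plus_Cnat_S_neq_0 (w : C) :
  exists N, forall m, (N <= m)%nat -> (1 <= m)%nat /\ w + Cnat (S m) <> 0.
Proof.
  destruct (exists_nat_gt (Cmod w + 1)) as [N HN]. exists N. intros m Hm.
  apply le_INR in Hm. split.
  - apply INR_le. simpl. pose proof (Cmod_ge_0 w). lra.
  - intro E. pose proof (Cmod_plus_Cnat_S_ge w m) as T. rewrite E, Cmod_0, S_INR in T. lra.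
Qed.

Lemma Cseq_lim_Cnat_div (w : C) : Cseq_lim (fun m => Cnat m / (w + Cnat (S m))) 1.
Proof.
  intros eps He. pose proof (Cmod_ge_0 w). pose proof (Cmod_ge_0 (w + 1)).
  destruct (exists_nat_gt (2 * (Cmod w + 1) + 2 * Cmod (w + 1) / eps)) as [N HN].
  exists N. intros n Hn. apply le_INR in Hn.
  assert (0 <= 2 * Cmod (w + 1) / eps)%R
    by (apply Rmult_le_pos; [lra | left; apply Rinv_0_lt_compat; lra]).
  pose proof (Cmod_plus_Cnat_S_ge w n) as T. rewrite S_INR in T.
  assert (Hpos : ((INR n + 1) / 2 <= Cmod (w + Cnat (S n)))%R) by lra.
  assert (Hnz : w + Cnat (S n) <> 0) by (intro E; rewrite E, Cmod_0 in Hpos; lra).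
  replace (Cnat n / (w + Cnat (S n)) - 1) with (- (w + 1) / (w + Cnat (S n))).
  2:{ rewrite Cnat_S in *. field. auto. }
  rewrite Cmod_div, Cmod_opp by auto.
  apply Rle_lt_trans with (Cmod (w + 1) / ((INR n + 1) / 2))%R.
  { apply Rmult_le_compat_l; [lra|]. apply Rinv_le_contravar; lra. }
  apply Rmult_lt_reg_r with ((INR n + 1) / 2)%R; [lra|].
  unfold Rdiv at 1. rewrite Rmult_assoc, Rinv_l, Rmult_1_r by lra.
  assert (HH : (2 * Cmod (w + 1) / eps < INR n + 1)%R) by lra.
  apply (Rmult_lt_compat_r eps) in HH; auto. unfold Rdiv in HH.
  rewrite Rmult_assoc, Rinv_l, Rmult_1_r in HH by lra. lra.
Qed.

Lemma Cseq_lim_div_Cnat (w : C) : Cseq_lim (fun m => (w + Cnat (S m)) / Cnat m) 1.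
Proof.
  intros eps He. pose proof (Cmod_ge_0 (w + 1)).
  destruct (exists_nat_gt (1 + Cmod (w + 1) / eps)) as [N HN].
  exists N. intros n Hn. apply le_INR in Hn.
  assert (0 <= Cmod (w + 1) / eps)%R
    by (apply Rmult_le_pos; [lra | left; apply Rinv_0_lt_compat; lra]).
  assert (Hn0 : Cnat n <> 0) by (apply Cnat_neq_0, (INR_le 1); simpl; lra).
  replace ((w + Cnat (S n)) / Cnat n - 1) with ((w + 1) / Cnat n)
    by (rewrite Cnat_S; field; auto).
  rewrite Cmod_div, Cmod_Cnat by auto.
  apply Rmult_lt_reg_r with (INR n); [lra|].
  unfold Rdiv at 1. rewrite Rmult_assoc, Rinv_l, Rmult_1_r by lra.
  assert (HH : (Cmod (w + 1) / eps < INR n)%R) by lra.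
  apply (Rmult_lt_compat_r eps) in HH; auto. unfold Rdiv in HH.
  rewrite Rmult_assoc, Rinv_l, Rmult_1_r in HH by lra. lra.
Qed.

Lemma CGamma_succ (w : C) :
  w <> 0 -> gauss_conv w -> CGamma (w + 1) = w * CGamma w /\ gauss_conv (w + 1).
Proof.
  intros Hw Hc. destruct (eventually_plus_Cnat_S_neq_0 w) as [N HN].
  assert (H : Cseq_lim (fun m => gauss_seq m (w + 1)) (CGamma w * (w * 1))).
  { apply (Cseq_lim_ext_eventually
      (fun m => gauss_seq m w * (w * (Cnat m / (w + Cnat (S m))))) _ _ N).
    { intros n Hn. destruct (HN n Hn). rewrite gauss_seq_plus_1 by auto.
      f_equal. unfold Cdiv. ring. }
    apply Cseq_lim_mult; [apply gauss_conv_CGamma; auto|].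
    apply Cseq_lim_mult; [apply Cseq_lim_const | apply Cseq_lim_Cnat_div]. }
  split; [|eexists; eauto].
  rewrite CGamma_gauss, (Clim_correct _ _ H). ring.
Qed.

Lemma CGamma_pred (w : C) :
  w <> 0 -> gauss_conv (w + 1) -> CGamma w = CGamma (w + 1) / w /\ gauss_conv w.
Proof.
  intros Hw Hc. destruct (eventually_plus_Cnat_S_neq_0 w) as [N HN].
  assert (H : Cseq_lim (fun m => gauss_seq m w) (CGamma (w + 1) * (1 * / w))).
  { apply (Cseq_lim_ext_eventually
      (fun m => gauss_seq m (w + 1) * ((w + Cnat (S m)) / Cnat m * / w)) _ _ N).
    { intros n Hn. destruct (HN n Hn). rewrite gauss_seq_plus_1 by auto.
      field. repeat split; auto. apply Cnat_neq_0; auto. }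
    apply Cseq_lim_mult; [apply gauss_conv_CGamma; auto|].
    apply Cseq_lim_mult; [apply Cseq_lim_div_Cnat | apply Cseq_lim_const]. }
  split; [|eexists; eauto].
  rewrite CGamma_gauss, (Clim_correct _ _ H). unfold Cdiv. ring.
Qed.

Fixpoint Cpoch1_deriv (m : nat) (w : C) : C :=
  match m with
  | O => 1
  | S m' => Cpoch1_deriv m' w * (w + Cnat (S m')) + Cpoch1 w m'
  end.

Definition gauss_logderiv (m : nat) (w : C) : C :=
  RtoC (ln (INR m)) - Cpoch1_deriv m w / Cpoch1 w m.

Definition gauss_ratio (m : nat) (w : C) : C :=
  Cnat (S m) * Cexp (w * RtoC (ln (INR (S m)) - ln (INR m))) / (w + Cnat (S m)).

Lemma is_Cderive_Cpoch1 m w : is_Cderive (fun v => Cpoch1 v m) w (Cpoch1_deriv m w).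
Proof.
  induction m as [|m IHm].
  - apply is_Cderive_id.
  - assert (Hlin : is_Cderive (fun v => v + Cnat (S m)) w (1 + 0))
      by (apply is_Cderive_plus; [apply is_Cderive_id | apply is_Cderive_const]).
    eapply is_Cderive_ext; [intros; reflexivity | | apply (is_Cderive_mult _ _ _ _ _ IHm Hlin)].
    simpl. ring_C.
Qed.

Lemma is_Cderive_gauss_seq m w :
  Cpoch1 w m <> 0 -> is_Cderive (gauss_seq m) w (gauss_seq m w * gauss_logderiv m w).
Proof.
  intros HP. set (c := RtoC (ln (INR m))).
  assert (H1 : is_Cderive (fun v => Cnat (fact m) * Cnatpow m v) w
      (0 * Cnatpow m w + Cnat (fact m) * ((1 * c + w * 0) * Cexp (w * c)))).
  { apply is_Cderive_mult; [apply is_Cderive_const|].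
    apply (is_Cderive_comp Cexp (fun v => v * c)); [apply is_Cderive_Cexp|].
    apply is_Cderive_mult; [apply is_Cderive_id | apply is_Cderive_const]. }
  assert (H2 : is_Cderive (fun v => / Cpoch1 v m) w
      (Cpoch1_deriv m w * - (/ Cpoch1 w m * / Cpoch1 w m))).
  { apply (is_Cderive_comp Cinv (fun v => Cpoch1 v m));
      [apply is_Cderive_Cinv; auto | apply is_Cderive_Cpoch1]. }
  eapply is_Cderive_ext; [intros; reflexivity | | apply (is_Cderive_mult _ _ _ _ _ H1 H2)].
  match goal with |- @eq _ ?a ?b => change (@eq C a b) end.
  unfold gauss_seq, gauss_logderiv, Cnatpow, Cdiv. fold c. field. auto.
Qed.

Lemma gauss_logderiv_S m w : Cpoch1 w m <> 0 -> w + Cnat (S m) <> 0 ->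
  gauss_logderiv (S m) w =
  gauss_logderiv m w + (RtoC (ln (INR (S m)) - ln (INR m)) - / (w + Cnat (S m))).
Proof.
  intros HP HS. unfold gauss_logderiv. rewrite Cpoch1_S. simpl Cpoch1_deriv.
  rewrite RtoC_minus. field. auto.
Qed.

Lemma gauss_seq_S m w : (1 <= m)%nat -> Cpoch1 w m <> 0 -> w + Cnat (S m) <> 0 ->
  gauss_seq (S m) w = gauss_seq m w * gauss_ratio m w.
Proof.
  intros Hm HP HS. unfold gauss_seq, gauss_ratio. rewrite Cpoch1_S, Cnatpow_S.
  rewrite fact_simpl, Cnat_mult. unfold Cdiv. field. auto.
Qed.

Lemma exp_le_compat x y : (x <= y)%R -> (exp x <= exp y)%R.
Proof. intros [H | ->]; [left; apply exp_increasing; auto | lra]. Qed.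

Lemma ln_1_plus_le y : (-1 < y)%R -> (ln (1 + y) <= y)%R.
Proof. intros Hy. rewrite <- (ln_exp y) at 2. apply ln_le; [lra | apply exp_ineq1_le]. Qed.

Lemma ln_succ_sub_ln_bounds (x : R) : (1 <= x)%R ->
  (1 / (x + 1) <= ln (x + 1) - ln x <= 1 / x)%R.
Proof.
  intros Hx. split.
  - assert (ln x - ln (x + 1) <= - (1 / (x + 1)))%R; [|lra].
    rewrite <- ln_div by lra.
    replace (x / (x + 1))%R with (1 + - (1 / (x + 1)))%R by (field; lra).
    apply ln_1_plus_le.
    assert (0 < 1 / (x + 1) < 1)%R; [|lra].
    split; [apply Rdiv_lt_0_compat; lra|].
    apply Rmult_lt_reg_r with (x + 1)%R; [lra|].
    unfold Rdiv. rewrite Rmult_assoc, Rinv_l by lra. lra.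
  - rewrite <- ln_div by lra. replace ((x + 1) / x)%R with (1 + 1 / x)%R by (field; lra).
    apply ln_1_plus_le. assert (0 < 1 / x)%R by (apply Rdiv_lt_0_compat; lra). lra.
Qed.

Lemma Cmod_telescope_le (u : nat -> C) (K : R) (m0 : nat) : (1 <= m0)%nat ->
  (forall m, (m0 <= m)%nat -> (Cmod (u (S m) - u m) <= K / (INR m * INR (S m)))%R) ->
  forall k, (Cmod (u (m0 + k)%nat - u m0) <= K * (1 / INR m0 - 1 / INR (m0 + k)))%R.
Proof.
  intros Hm0 H k. induction k as [|k IHk].
  - rewrite Nat.add_0_r. replace (u m0 - u m0) with (RtoC 0) by ring. rewrite Cmod_0.
    right; ring.
  - replace (m0 + S k)%nat with (S (m0 + k)) by lia.
    replace (u (S (m0 + k)) - u m0) with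
      ((u (S (m0 + k)) - u (m0 + k)%nat) + (u (m0 + k)%nat - u m0)) by ring.
    eapply Rle_trans; [apply Cmod_triangle|].
    specialize (H (m0 + k)%nat ltac:(lia)).
    assert (Hp : (1 <= INR (m0 + k))%R) by (apply (le_INR 1); lia).
    assert (Hq : (1 <= INR m0)%R) by (apply (le_INR 1); lia).
    rewrite S_INR in *.
    replace (K * (1 / INR m0 - 1 / (INR (m0 + k) + 1)))%R with
      (K / (INR (m0 + k) * (INR (m0 + k) + 1)) + K * (1 / INR m0 - 1 / INR (m0 + k)))%R
      by (field; lra).
    lra.
Qed.

Lemma Cmod_sub_le_of_increments (u : nat -> C) (K : R) (m0 : nat) :
  (1 <= m0)%nat -> (0 <= K)%R ->
  (forall m, (m0 <= m)%nat -> (Cmod (u (S m) - u m) <= K / (INR m * INR (S m)))%R) ->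
  forall p q, (m0 <= p)%nat -> (p <= q)%nat -> (Cmod (u q - u p) <= K / INR p)%R.
Proof.
  intros Hm0 HK H p q Hp Hq.
  pose proof (Cmod_telescope_le u K p ltac:(lia) (fun m Hm => H m ltac:(lia)) (q - p)) as T.
  replace (p + (q - p))%nat with q in T by lia.
  eapply Rle_trans; [apply T|].
  assert (0 < INR q)%R by (apply (lt_INR 0); lia).
  assert (0 <= K * / INR q)%R by (apply Rmult_le_pos; auto; left; apply Rinv_0_lt_compat; auto).
  unfold Rdiv. rewrite !Rmult_1_l. rewrite Rmult_minus_distr_l. lra.
Qed.

Lemma unif_cauchy_of_increments (u : C -> nat -> C) (K : R) (m0 : nat) (P : C -> Prop) :
  (1 <= m0)%nat -> (0 <= K)%R ->
  (forall w m, P w -> (m0 <= m)%nat ->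
     (Cmod (u w (S m) - u w m) <= K / (INR m * INR (S m)))%R) ->
  forall eps, (0 < eps)%R -> exists N, forall p q w, (N <= p)%nat -> (N <= q)%nat -> P w ->
     (Cmod (u w p - u w q) <= eps)%R.
Proof.
  intros Hm0 HK H eps He.
  destruct (exists_nat_gt (2 * K / eps)) as [N HN].
  exists (N + m0)%nat. intros p q w Hp Hq Hw.
  assert (HNm : (0 < INR (N + m0))%R) by (apply (lt_INR 0); lia).
  assert (HB : (2 * (K / INR (N + m0)) <= eps)%R).
  { assert (INR N <= INR (N + m0))%R by (apply le_INR; lia).
    apply Rmult_le_reg_r with (INR (N + m0)); auto.
    replace (2 * (K / INR (N + m0)) * INR (N + m0))%R with (2 * K)%R by (field; lra).
    replace (2 * K)%R with (2 * K / eps * eps)%R by (field; lra).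
    nra. }
  pose proof (Cmod_sub_le_of_increments (u w) K m0 Hm0 HK (fun m Hm => H w m Hw Hm)) as T.
  replace (u w p - u w q) with ((u w p - u w (N + m0)%nat) - (u w q - u w (N + m0)%nat))
    by ring.
  eapply Rle_trans; [unfold Cminus at 1; apply Cmod_triangle|]. rewrite Cmod_opp.
  assert (Cmod (u w p - u w (N + m0)%nat) <= K / INR (N + m0))%R by (apply T; lia).
  assert (Cmod (u w q - u w (N + m0)%nat) <= K / INR (N + m0))%R by (apply T; lia).
  lra.
Qed.

Lemma Cmod_le_of_ratio_increments (u : nat -> C) (K : R) (m0 : nat) :
  (0 <= K)%R -> (1 <= m0)%nat ->
  (forall m, (m0 <= m)%nat ->
     (Cmod (u (S m)) <= Cmod (u m) * (1 + K / (INR m * INR (S m))))%R) ->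
  forall m, (m0 <= m)%nat -> (Cmod (u m) <= Cmod (u m0) * exp K)%R.
Proof.
  intros HK Hm0 H.
  assert (Hq : (1 <= INR m0)%R) by (apply (le_INR 1); lia).
  assert (Hk : forall k, (Cmod (u (m0 + k)%nat) <=
                          Cmod (u m0) * exp (K * (1 / INR m0 - 1 / INR (m0 + k))))%R).
  { induction k as [|k IHk].
    - rewrite Nat.add_0_r, Rminus_diag, Rmult_0_r, exp_0. lra.
    - replace (m0 + S k)%nat with (S (m0 + k)) by lia.
      eapply Rle_trans; [apply H; lia|].
      assert (Hx : (1 <= INR (m0 + k))%R) by (apply (le_INR 1); lia).
      rewrite S_INR.
      replace (K * (1 / INR m0 - 1 / (INR (m0 + k) + 1)))%R with
        (K * (1 / INR m0 - 1 / INR (m0 + k)) + K / (INR (m0 + k) * (INR (m0 + k) + 1)))%R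
        by (field; lra).
      rewrite exp_plus, <- Rmult_assoc.
      apply Rmult_le_compat; [apply Cmod_ge_0 | | auto | apply exp_ineq1_le].
      assert (0 <= K / (INR (m0 + k) * (INR (m0 + k) + 1)))%R; [|lra].
      apply Rmult_le_pos; auto. left; apply Rinv_0_lt_compat, Rmult_lt_0_compat; lra. }
  intros m Hm. replace m with (m0 + (m - m0))%nat by lia.
  eapply Rle_trans; [apply Hk|].
  apply Rmult_le_compat_l; [apply Cmod_ge_0|]. apply exp_le_compat.
  assert (Hx : (1 <= INR (m0 + (m - m0)))%R) by (apply (le_INR 1); lia).
  assert (0 < 1 / INR (m0 + (m - m0)))%R by (apply Rdiv_lt_0_compat; lra).
  assert (1 / INR m0 <= 1)%R.
  { apply Rmult_le_reg_r with (INR m0); [lra|].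
    unfold Rdiv. rewrite Rmult_assoc, Rinv_l by lra. lra. }
  rewrite <- (Rmult_1_r K) at 2. apply Rmult_le_compat_l; lra.
Qed.

Lemma gauss_ratio_sub_1 m w : w + Cnat (S m) <> 0 ->
  let e := (ln (INR (S m)) - ln (INR m))%R in
  gauss_ratio m w - 1 =
  (Cnat (S m) * (Cexp (w * RtoC e) - 1 - w * RtoC e) + w * RtoC (INR (S m) * e - 1))
  / (w + Cnat (S m)).
Proof.
  intros HwS e. unfold gauss_ratio. fold e.
  rewrite RtoC_minus, RtoC_mult. change (RtoC (INR (S m))) with (Cnat (S m)).
  field. auto.
Qed.

Lemma ln_step_mult_bounds (x : R) : (1 <= x)%R ->
  (0 <= (x + 1) * (ln (x + 1) - ln x) - 1 <= 1 / x)%R.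
Proof.
  intros Hx. pose proof (ln_succ_sub_ln_bounds x Hx) as [Hlo Hhi]. split.
  - assert ((x + 1) * (1 / (x + 1)) = 1)%R by (field; lra).
    assert ((x + 1) * (1 / (x + 1)) <= (x + 1) * (ln (x + 1) - ln x))%R
      by (apply Rmult_le_compat_l; lra).
    lra.
  - assert ((x + 1) * (1 / x) = 1 + 1 / x)%R by (field; lra).
    assert ((x + 1) * (ln (x + 1) - ln x) <= (x + 1) * (1 / x))%R
      by (apply Rmult_le_compat_l; lra).
    lra.
Qed.

Lemma Cmod_mult_ln_step_le (w : C) (A x : R) : (1 <= x)%R -> (Cmod w <= A)%R ->
  (Cmod (w * RtoC (ln (x + 1) - ln x)) <= A / x)%R.
Proof.
  intros Hx HA. pose proof (ln_succ_sub_ln_bounds x Hx) as He.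
  assert (0 < 1 / (x + 1))%R by (apply Rdiv_lt_0_compat; lra).
  rewrite Cmod_mult, Cmod_R, Rabs_pos_eq by lra.
  unfold Rdiv in *. rewrite <- (Rmult_1_l (/ x)).
  apply Rmult_le_compat; [apply Cmod_ge_0 | lra | auto | lra].
Qed.

Lemma gauss_ratio_bound_arith (x A : R) : (1 <= x)%R -> (0 <= A)%R ->
  (((x + 1) * (12 * (A / x) ^ 2) + A * (1 / x)) / (x + 1)
   <= 2 * (12 * A ^ 2 + A) / (x * (x + 1)))%R.
Proof.
  intros Hx HA.
  replace (((x + 1) * (12 * (A / x) ^ 2) + A * (1 / x)) / (x + 1))%R
    with ((12 * A ^ 2 * (x + 1) + A * x) * / (x ^ 2 * (x + 1)))%R by (field; lra).
  replace (2 * (12 * A ^ 2 + A) / (x * (x + 1)))%R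
    with ((2 * (12 * A ^ 2 + A) * x) * / (x ^ 2 * (x + 1)))%R by (field; lra).
  apply Rmult_le_compat_r.
  - left; apply Rinv_0_lt_compat, Rmult_lt_0_compat; [apply pow_lt |]; lra.
  - pose proof (pow2_ge_0 A). nra.
Qed.

Section HalfPlaneBounds.

Variable w : C.
Hypothesis HRe : (1 / 2 <= fst w)%R.

Lemma Cmod_plus_Cnat_ge j : (INR j + 1 / 2 <= Cmod (w + Cnat j))%R.
Proof.
  eapply Rle_trans; [|apply re_le_Cmod]. eapply Rle_trans; [|apply Rle_abs].
  unfold Cnat; simpl. lra.
Qed.

Lemma plus_Cnat_neq_0 j : w + Cnat j <> 0.
Proof.
  intros E. pose proof (Cmod_plus_Cnat_ge j) as T. rewrite E, Cmod_0 in T.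
  pose proof (pos_INR j). lra.
Qed.

Lemma Cmod_Cpoch1_ge m : (INR (fact m) / 2 <= Cmod (Cpoch1 w m))%R.
Proof.
  induction m as [|m IHm].
  - pose proof (Cmod_plus_Cnat_ge 0) as T. rewrite Cnat_0, Cplus_0_r in T. simpl in *. lra.
  - rewrite Cpoch1_S, Cmod_mult, fact_simpl, mult_INR.
    pose proof (Cmod_plus_Cnat_ge (S m)). pose proof (pos_INR (S m)).
    pose proof (INR_fact_lt_0 m).
    replace (INR (S m) * INR (fact m) / 2)%R with (INR (fact m) / 2 * INR (S m))%R
      by (unfold Rdiv; ring).
    apply Rmult_le_compat; lra.
Qed.

Lemma Cpoch1_neq_0 m : Cpoch1 w m <> 0.
Proof.
  intros E. pose proof (Cmod_Cpoch1_ge m) as T. rewrite E, Cmod_0 in T.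
  pose proof (INR_fact_lt_0 m). lra.
Qed.

Lemma Cmod_Cpoch1_logderiv_le m : (Cmod (Cpoch1_deriv m w / Cpoch1 w m) <= 2 * INR (S m))%R.
Proof.
  assert (Hinv : forall j, (Cmod (/ (w + Cnat j)) <= 2)%R).
  { intros j. rewrite Cmod_inv by apply plus_Cnat_neq_0.
    pose proof (Cmod_plus_Cnat_ge j). pose proof (pos_INR j).
    replace 2%R with (/ (1 / 2))%R by field. apply Rinv_le_contravar; lra. }
  induction m as [|m IHm].
  - replace (Cpoch1_deriv 0 w / Cpoch1 w 0) with (/ (w + Cnat 0))
      by (rewrite Cnat_0, Cplus_0_r; simpl; unfold Cdiv; ring).
    simpl. specialize (Hinv 0%nat). lra.
  - replace (Cpoch1_deriv (S m) w / Cpoch1 w (S m))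
      with (Cpoch1_deriv m w / Cpoch1 w m + / (w + Cnat (S m))).
    2:{ rewrite Cpoch1_S. simpl Cpoch1_deriv. field.
        split; [apply plus_Cnat_neq_0 | apply Cpoch1_neq_0]. }
    eapply Rle_trans; [apply Cmod_triangle|]. specialize (Hinv (S m)).
    rewrite (S_INR (S m)). lra.
Qed.

Variable A : R.
Hypothesis HA : (Cmod w <= A)%R.

Lemma Cmod_gauss_seq_le m : (1 <= m)%nat ->
  (Cmod (gauss_seq m w) <= 2 * exp (A * ln (INR m)))%R.
Proof.
  intros Hm. unfold gauss_seq. rewrite Cmod_div by apply Cpoch1_neq_0.
  rewrite Cmod_mult, Cmod_Cnat, Cmod_Cnatpow.
  pose proof (Cmod_Cpoch1_ge m). pose proof (INR_fact_lt_0 m).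
  assert (Hl : (0 <= ln (INR m))%R)
    by (rewrite <- ln_1; apply ln_le; [lra | apply (le_INR 1); auto]).
  assert (exp (fst w * ln (INR m)) <= exp (A * ln (INR m)))%R.
  { apply exp_le_compat, Rmult_le_compat_r; auto.
    eapply Rle_trans; [apply Rle_abs|]. eapply Rle_trans; [apply re_le_Cmod | auto]. }
  pose proof (exp_pos (fst w * ln (INR m))).
  apply Rle_trans with (INR (fact m) * exp (A * ln (INR m)) / (INR (fact m) / 2))%R.
  - unfold Rdiv. apply Rmult_le_compat.
    + apply Rmult_le_pos; lra.
    + left; apply Rinv_0_lt_compat; lra.
    + apply Rmult_le_compat_l; lra.
    + apply Rinv_le_contravar; lra.
  - right. field. lra.
Qed.

Lemma Cmod_gauss_ratio_sub_1_le m : (1 <= m)%nat -> (A <= INR m)%R ->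
  (Cmod (gauss_ratio m w - 1) <= 2 * (12 * A ^ 2 + A) / (INR m * INR (S m)))%R.
Proof.
  intros Hm HAm.
  assert (Hx : (1 <= INR m)%R) by (apply (le_INR 1); auto).
  rewrite gauss_ratio_sub_1 by apply plus_Cnat_neq_0. rewrite S_INR in *.
  set (x := INR m) in *. set (e := (ln (x + 1) - ln x)%R).
  pose proof (ln_step_mult_bounds x Hx) as He2. fold e in He2.
  assert (HA0 : (0 <= A)%R) by (pose proof (Cmod_ge_0 w); lra).
  pose proof (Cmod_mult_ln_step_le w A x Hx HA) as Hu. fold e in Hu.
  assert (Hu1 : (Cmod (w * RtoC e) <= 1)%R).
  { eapply Rle_trans; [apply Hu|]. apply Rmult_le_reg_r with x; [lra|].
    unfold Rdiv. rewrite Rmult_assoc, Rinv_l by lra. lra. }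
  pose proof (Cmod_Cexp_taylor_le _ Hu1) as Hex.
  assert (HCS : Cnat (S m) = RtoC (x + 1)) by (unfold Cnat; rewrite S_INR; auto).
  assert (HD : (x + 1 <= Cmod (w + Cnat (S m)))%R)
    by (pose proof (Cmod_plus_Cnat_ge (S m)) as T; rewrite S_INR in T; fold x in T; lra).
  assert (HN : (Cmod (Cnat (S m) * (Cexp (w * RtoC e) - 1 - w * RtoC e)
                      + w * RtoC ((x + 1) * e - 1))
                <= (x + 1) * (12 * (A / x) ^ 2) + A * (1 / x))%R).
  { eapply Rle_trans; [apply Cmod_triangle|]. rewrite !Cmod_mult, HCS, !Cmod_R.
    rewrite (Rabs_pos_eq (x + 1)), (Rabs_pos_eq ((x + 1) * e - 1)) by lra.
    apply Rplus_le_compat.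
    - apply Rmult_le_compat_l; [lra|]. eapply Rle_trans; [apply Hex|].
      apply Rmult_le_compat_l; [lra|]. apply pow_incr. split; [apply Cmod_ge_0 | auto].
    - apply Rmult_le_compat; try lra. apply Cmod_ge_0. }
  rewrite Cmod_div by apply plus_Cnat_neq_0.
  eapply Rle_trans; [|apply gauss_ratio_bound_arith; auto].
  unfold Rdiv. apply Rmult_le_compat; auto; [apply Cmod_ge_0 | |].
  - left; apply Rinv_0_lt_compat. lra.
  - apply Rinv_le_contravar; lra.
Qed.

Lemma Cmod_gauss_logderiv_S_sub_le m : (1 <= m)%nat ->
  (Cmod (gauss_logderiv (S m) w - gauss_logderiv m w) <= (A + 1) / (INR m * INR (S m)))%R.
Proof.
  intros Hm.
  rewrite gauss_logderiv_S by (apply Cpoch1_neq_0 || apply plus_Cnat_neq_0).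
  replace (gauss_logderiv m w + (RtoC (ln (INR (S m)) - ln (INR m)) - / (w + Cnat (S m)))
           - gauss_logderiv m w)
    with ((RtoC (ln (INR (S m)) - ln (INR m)) - / Cnat (S m))
          + w / (Cnat (S m) * (w + Cnat (S m)))).
  2:{ field. split; [apply plus_Cnat_neq_0 | apply Cnat_neq_0; lia]. }
  assert (Hx : (1 <= INR m)%R) by (apply (le_INR 1); auto).
  pose proof (Cmod_plus_Cnat_ge (S m)) as HD.
  eapply Rle_trans; [apply Cmod_triangle|].
  unfold Cnat at 1. rewrite <- RtoC_inv, <- RtoC_minus, Cmod_R by (pose proof (pos_INR m); rewrite S_INR; lra).
  rewrite Cmod_div, Cmod_mult, Cmod_Cnat
    by (apply Cmult_neq_0; [apply Cnat_neq_0; lia | apply plus_Cnat_neq_0]).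
  rewrite S_INR in *. set (x := INR m) in *.
  pose proof (ln_succ_sub_ln_bounds x Hx) as He.
  assert (HA0 : (0 <= A)%R) by (pose proof (Cmod_ge_0 w); lra).
  assert (Rabs (ln (x + 1) - ln x - / (x + 1)) <= 1 / (x * (x + 1)))%R.
  { unfold Rdiv in He. rewrite Rabs_pos_eq by lra.
    replace (1 / (x * (x + 1)))%R with (1 / x - / (x + 1))%R by (field; lra).
    unfold Rdiv. lra. }
  assert (Cmod w / ((x + 1) * Cmod (w + Cnat (S m))) <= A / (x * (x + 1)))%R.
  { unfold Rdiv. apply Rmult_le_compat; auto; [apply Cmod_ge_0 | |].
    - left; apply Rinv_0_lt_compat, Rmult_lt_0_compat; lra.
    - apply Rinv_le_contravar; [apply Rmult_lt_0_compat; lra|].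
      rewrite Rmult_comm. apply Rmult_le_compat; lra. }
  replace ((A + 1) / (x * (x + 1)))%R with (1 / (x * (x + 1)) + A / (x * (x + 1)))%R
    by (field; lra).
  lra.
Qed.

End HalfPlaneBounds.

(** * Holomorphy of Gamma *)

Definition gauss_holo (z : C) : Prop :=
  (exists d, (0 < d)%R /\ forall w, (Cmod (w - z) < d)%R -> gauss_conv w) /\
  exists L, is_Cderive CGamma z L.

Section GaussHoloRight.

Variable z0 : C.
Hypothesis Hz0 : (1 <= fst z0)%R.

Let A := (Cmod z0 + 1)%R.

Variable m0 : nat.
Hypothesis Hm0 : (1 <= m0)%nat.
Hypothesis HAm0 : (A <= INR m0)%R.

Let ball (w : C) := (Cmod (w - z0) < 1 / 2)%R.
Let K := (2 * (12 * A ^ 2 + A))%R.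
Let C1 := (2 * exp (A * ln (INR m0)) * exp K)%R.
Let C2 := (ln (INR m0) + 2 * INR (S m0) + (A + 1))%R.

Lemma A_ge_0 : (0 <= A)%R.
Proof. unfold A. pose proof (Cmod_ge_0 z0). lra. Qed.

Lemma K_ge_0 : (0 <= K)%R.
Proof. unfold K. pose proof A_ge_0. pose proof (pow2_ge_0 A). lra. Qed.

Lemma C1_ge_0 : (0 <= C1)%R.
Proof.
  unfold C1. pose proof (exp_pos (A * ln (INR m0))). pose proof (exp_pos K).
  apply Rmult_le_pos; [apply Rmult_le_pos|]; lra.
Qed.

Lemma le_INR_of_ge_m0 m : (m0 <= m)%nat -> (A <= INR m)%R.
Proof. intros Hm. apply le_INR in Hm. lra. Qed.

Lemma ball_Re_ge w : ball w -> (1 / 2 <= fst w)%R.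
Proof.
  intros Hw. pose proof (re_le_Cmod (w - z0)) as T. simpl in T.
  pose proof (Rle_abs (- (fst w + - fst z0))) as T'. rewrite Rabs_Ropp in T'.
  unfold ball in Hw. lra.
Qed.

Lemma ball_Cmod_le w : ball w -> (Cmod w <= A)%R.
Proof.
  intros Hw. pose proof (Cmod_triangle (w - z0) z0) as T.
  replace (w - z0 + z0) with w in T by ring. unfold ball in Hw. unfold A. lra.
Qed.

Lemma gauss_seq_S_ball w m : ball w -> (m0 <= m)%nat ->
  gauss_seq (S m) w = gauss_seq m w * gauss_ratio m w.
Proof.
  intros Hw Hm. pose proof (ball_Re_ge w Hw).
  apply gauss_seq_S; [lia | apply Cpoch1_neq_0 | apply plus_Cnat_neq_0]; auto.
Qed.

Lemma gauss_ratio_ball w m : ball w -> (m0 <= m)%nat ->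
  (Cmod (gauss_ratio m w - 1) <= K / (INR m * INR (S m)))%R.
Proof.
  intros Hw Hm. apply Cmod_gauss_ratio_sub_1_le;
    [apply ball_Re_ge | apply ball_Cmod_le | lia | apply le_INR_of_ge_m0]; auto.
Qed.

Lemma Cmod_gauss_seq_ball w m : ball w -> (m0 <= m)%nat -> (Cmod (gauss_seq m w) <= C1)%R.
Proof.
  intros Hw Hm.
  eapply Rle_trans; [apply (Cmod_le_of_ratio_increments (fun k => gauss_seq k w) K m0);
                     auto using K_ge_0|].
  - intros k Hk. rewrite gauss_seq_S_ball, Cmod_mult by auto.
    apply Rmult_le_compat_l; [apply Cmod_ge_0|].
    pose proof (Cmod_triangle (gauss_ratio k w - 1) 1) as T.
    replace (gauss_ratio k w - 1 + 1) with (gauss_ratio k w) in T by ring.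
    rewrite Cmod_1 in T. pose proof (gauss_ratio_ball w k Hw Hk). lra.
  - unfold C1. apply Rmult_le_compat_r; [left; apply exp_pos|].
    apply Cmod_gauss_seq_le; [apply ball_Re_ge | apply ball_Cmod_le |]; auto.
Qed.

Lemma gauss_seq_increment_ball w m : ball w -> (m0 <= m)%nat ->
  (Cmod (gauss_seq (S m) w - gauss_seq m w) <= C1 * K / (INR m * INR (S m)))%R.
Proof.
  intros Hw Hm. rewrite gauss_seq_S_ball by auto.
  replace (gauss_seq m w * gauss_ratio m w - gauss_seq m w)
    with (gauss_seq m w * (gauss_ratio m w - 1)) by ring.
  rewrite Cmod_mult. unfold Rdiv. rewrite Rmult_assoc.
  apply Rmult_le_compat; [apply Cmod_ge_0 | apply Cmod_ge_0 | |].
  - apply Cmod_gauss_seq_ball; auto.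
  - apply gauss_ratio_ball; auto.
Qed.

Lemma gauss_logderiv_increment_ball w m : ball w -> (m0 <= m)%nat ->
  (Cmod (gauss_logderiv (S m) w - gauss_logderiv m w) <= (A + 1) / (INR m * INR (S m)))%R.
Proof.
  intros Hw Hm. apply Cmod_gauss_logderiv_S_sub_le;
    [apply ball_Re_ge | apply ball_Cmod_le | lia]; auto.
Qed.

Lemma Cmod_gauss_logderiv_ball w m : ball w -> (m0 <= m)%nat ->
  (Cmod (gauss_logderiv m w) <= C2)%R.
Proof.
  intros Hw Hm. pose proof A_ge_0.
  pose proof (Cmod_sub_le_of_increments (fun k => gauss_logderiv k w) (A + 1) m0 Hm0
    ltac:(lra) (fun k Hk => gauss_logderiv_increment_ball w k Hw Hk) m0 m (le_n _) Hm) as T.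
  assert (Hl : (0 <= ln (INR m0))%R)
    by (rewrite <- ln_1; apply ln_le; [lra | apply (le_INR 1); auto]).
  assert (T0 : (Cmod (gauss_logderiv m0 w) <= ln (INR m0) + 2 * INR (S m0))%R).
  { unfold gauss_logderiv. eapply Rle_trans; [unfold Cminus; apply Cmod_triangle|].
    rewrite Cmod_opp, Cmod_R, Rabs_pos_eq by auto.
    pose proof (Cmod_Cpoch1_logderiv_le w (ball_Re_ge w Hw) m0). lra. }
  assert ((A + 1) / INR m0 <= A + 1)%R.
  { assert (1 <= INR m0)%R by (apply (le_INR 1); auto). unfold Rdiv.
    rewrite <- (Rmult_1_r (A + 1)) at 2. apply Rmult_le_compat_l; [lra|].
    rewrite <- Rinv_1. apply Rinv_le_contravar; lra. }
  pose proof (Cmod_triangle (gauss_logderiv m w - gauss_logderiv m0 w) (gauss_logderiv m0 w))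
    as T1.
  replace (gauss_logderiv m w - gauss_logderiv m0 w + gauss_logderiv m0 w)
    with (gauss_logderiv m w) in T1 by ring.
  unfold C2. lra.
Qed.

Lemma gauss_deriv_increment_ball w m : ball w -> (m0 <= m)%nat ->
  (Cmod (gauss_seq (S m) w * gauss_logderiv (S m) w - gauss_seq m w * gauss_logderiv m w)
   <= C1 * (K * C2 + (A + 1)) / (INR m * INR (S m)))%R.
Proof.
  intros Hw Hm. rewrite gauss_seq_S_ball by auto.
  replace (gauss_seq m w * gauss_ratio m w * gauss_logderiv (S m) w
           - gauss_seq m w * gauss_logderiv m w)
    with (gauss_seq m w * ((gauss_ratio m w - 1) * gauss_logderiv (S m) w
          + (gauss_logderiv (S m) w - gauss_logderiv m w))) by ring.
  rewrite Cmod_mult.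
  assert (0 < INR m)%R by (apply (lt_INR 0); lia).
  assert (0 < INR (S m))%R by (apply (lt_INR 0); lia).
  replace (C1 * (K * C2 + (A + 1)) / (INR m * INR (S m)))%R
    with (C1 * (K / (INR m * INR (S m)) * C2 + (A + 1) / (INR m * INR (S m))))%R
    by (field; lra).
  apply Rmult_le_compat; [apply Cmod_ge_0 | apply Cmod_ge_0 | apply Cmod_gauss_seq_ball; auto|].
  eapply Rle_trans; [apply Cmod_triangle|].
  apply Rplus_le_compat; [|apply gauss_logderiv_increment_ball; auto].
  rewrite Cmod_mult.
  apply Rmult_le_compat; try apply Cmod_ge_0.
  - apply gauss_ratio_ball; auto.
  - apply Cmod_gauss_logderiv_ball; auto.
Qed.

Lemma gauss_conv_ball w : ball w -> gauss_conv w.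
Proof.
  intros Hw. apply Cseq_cauchy_lim. intros eps He.
  destruct (unif_cauchy_of_increments (fun w m => gauss_seq m w) (C1 * K) m0 ball Hm0
    (Rmult_le_pos _ _ C1_ge_0 K_ge_0) gauss_seq_increment_ball eps He) as [N HN].
  exists N. intros p q Hp Hq. apply HN; auto.
Qed.

Lemma gauss_holo_right : gauss_holo z0.
Proof.
  split; [exists (1 / 2)%R; split; [lra | exact gauss_conv_ball]|].
  assert (HC2 : (0 <= C2)%R).
  { eapply Rle_trans; [apply (Cmod_ge_0 (gauss_logderiv m0 z0))|].
    apply Cmod_gauss_logderiv_ball; auto.
    unfold ball. replace (z0 - z0) with (RtoC 0) by ring. rewrite Cmod_0. lra. }
  apply (is_Cderive_unif_lim (fun k => gauss_seq (k + m0))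
           (fun k w => gauss_seq (k + m0) w * gauss_logderiv (k + m0) w) CGamma z0 (1 / 2));
    [| | lra |].
  - intros m w Hw. apply is_Cderive_gauss_seq, Cpoch1_neq_0, ball_Re_ge. exact Hw.
  - intros w Hw. apply (Cseq_lim_shift (fun m => gauss_seq m w)).
    apply gauss_conv_CGamma, gauss_conv_ball. exact Hw.
  - intros eps He.
    destruct (unif_cauchy_of_increments (fun w m => gauss_seq m w * gauss_logderiv m w)
      (C1 * (K * C2 + (A + 1))) m0 ball Hm0) with (eps := eps) as [N HN]; auto.
    + pose proof C1_ge_0. pose proof K_ge_0. pose proof A_ge_0.
      apply Rmult_le_pos; [|apply Rplus_le_le_0_compat; [apply Rmult_le_pos|]]; lra.
    + exact gauss_deriv_increment_ball.
    + exists N. intros p q w Hp Hq Hw. apply (HN (p + m0)%nat (q + m0)%nat w); auto; lia.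
Qed.

End GaussHoloRight.

Definition not_nonpos_int (z : C) : Prop := forall j, z + Cnat j <> 0.

Lemma not_nonpos_int_neq_0 z : not_nonpos_int z -> z <> 0.
Proof. intros H E. apply (H 0%nat). rewrite E, Cnat_0. ring. Qed.

Lemma not_nonpos_int_plus_Cnat z j : not_nonpos_int z -> not_nonpos_int (z + Cnat j).
Proof.
  intros H i. replace (z + Cnat j + Cnat i) with (z + Cnat (j + i)) by (rewrite Cnat_plus; ring).
  apply H.
Qed.

Lemma not_nonpos_int_plus_1 z : not_nonpos_int z -> not_nonpos_int (z + 1).
Proof.
  intros H j. replace (z + 1 + Cnat j) with (z + Cnat (S j)) by (rewrite Cnat_S; ring).
  apply H.
Qed.

Lemma not_nonpos_int_of_not_neg_int z : not_neg_int z -> z <> 0 -> not_nonpos_int z.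
Proof.
  intros H Hz [|j] E; [apply Hz; rewrite <- E, Cnat_0; ring|].
  apply (H j). rewrite <- (Cplus_0_l (Copp _)), <- E. ring.
Qed.

Lemma not_nonpos_int_succ_of_not_neg_int z : not_neg_int z -> not_nonpos_int (z + 1).
Proof.
  intros H j E. apply (H j). rewrite Cnat_S. rewrite <- (Cplus_0_l (Copp _)), <- E. ring.
Qed.

Lemma gauss_holo_pred (z : C) : z <> 0 -> gauss_holo (z + 1) -> gauss_holo z.
Proof.
  intros Hz [[d [Hd Hc]] [L HL]].
  assert (Hmz : (0 < Cmod z)%R) by (apply Cmod_gt_0; auto).
  set (d' := Rmin d (Cmod z)).
  assert (Hd' : (0 < d')%R) by (apply Rmin_glb_lt; auto).
  assert (Hball : forall w, (Cmod (w - z) < d')%R -> w <> 0 /\ gauss_conv (w + 1)).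
  { intros w Hw. split.
    - intro E. subst. replace (0 - z) with (- z) in Hw by ring. rewrite Cmod_opp in Hw.
      pose proof (Rmin_r d (Cmod z)). unfold d' in Hw. lra.
    - apply Hc. replace (w + 1 - (z + 1)) with (w - z) by ring.
      eapply Rlt_le_trans; [apply Hw | apply Rmin_l]. }
  split.
  - exists d'. split; auto. intros w Hw. destruct (Hball w Hw). apply CGamma_pred; auto.
  - exists ((1 + 0) * L * / z + CGamma (z + 1) * (- (/ z * / z))).
    apply (is_Cderive_ext_loc (fun v => CGamma (v + 1) * / v)).
    { exists d'. split; auto. intros y Hy. destruct (Hball y Hy).
      symmetry. apply CGamma_pred; auto. }
    apply (is_Cderive_mult (fun v => CGamma (v + 1)) Cinv); [|apply is_Cderive_Cinv; auto].
    apply (is_Cderive_comp CGamma (fun v => v + 1)); [exact HL|].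
    apply is_Cderive_plus; [apply is_Cderive_id | apply is_Cderive_const].
Qed.

Lemma gauss_holo_Re_ge_1 z : (1 <= fst z)%R -> gauss_holo z.
Proof.
  intros Hz. destruct (exists_nat_gt (Cmod z + 1)) as [m1 Hm1].
  apply (gauss_holo_right z Hz (S m1)); [lia|].
  rewrite S_INR. lra.
Qed.

Lemma gauss_holo_all z : not_nonpos_int z -> gauss_holo z.
Proof.
  intros Hz. destruct (exists_nat_gt (1 - fst z)) as [N HN].
  revert z Hz HN. induction N as [|N IHN]; intros z Hz HN.
  - apply gauss_holo_Re_ge_1. simpl in HN. lra.
  - apply gauss_holo_pred; [apply not_nonpos_int_neq_0; auto|].
    apply IHN; [apply not_nonpos_int_plus_1; auto|].
    rewrite S_INR in HN. simpl. lra.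
Qed.

Lemma gauss_conv_all z : not_nonpos_int z -> gauss_conv z.
Proof.
  intros Hz. destruct (gauss_holo_all z Hz) as [[d [Hd Hc]] _]. apply Hc.
  replace (z - z) with (RtoC 0) by ring. rewrite Cmod_0. auto.
Qed.

Lemma CGamma_plus_1 z : not_nonpos_int z -> CGamma (z + 1) = z * CGamma z.
Proof.
  intros Hz. apply CGamma_succ; [apply not_nonpos_int_neq_0 | apply gauss_conv_all]; auto.
Qed.

Lemma digamma_plus_1 z : not_nonpos_int z -> CGamma z <> 0 -> digamma (z + 1) = digamma z + / z.
Proof.
  intros Hg HG. pose proof (not_nonpos_int_neq_0 z Hg) as Hz.
  destruct (gauss_holo_all z Hg) as [[d [Hd Hc]] [L HL]].
  assert (Hmz : (0 < Cmod z)%R) by (apply Cmod_gt_0; auto).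
  set (d' := Rmin d (Cmod z)).
  assert (Hd' : (0 < d')%R) by (apply Rmin_glb_lt; auto).
  assert (Hloc : forall y, (Cmod (y - (z + 1)) < d')%R -> (y - 1) * CGamma (y - 1) = CGamma y).
  { intros y Hy.
    assert (Hw : (Cmod ((y - 1) - z) < d')%R)
      by (replace (y - 1 - z) with (y - (z + 1)) by ring; auto).
    assert (y - 1 <> 0).
    { intro E. rewrite E in Hw. replace (0 - z) with (- z) in Hw by ring.
      rewrite Cmod_opp in Hw. pose proof (Rmin_r d (Cmod z)). unfold d' in Hw. lra. }
    assert (gauss_conv (y - 1)) by (apply Hc; eapply Rlt_le_trans; [apply Hw | apply Rmin_l]).
    destruct (CGamma_succ (y - 1)) as [E _]; auto.
    replace (y - 1 + 1) with y in E by ring. auto. }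
  assert (HD : is_Cderive CGamma (z + 1) (CGamma z + z * L)).
  { apply (is_Cderive_ext_loc (fun y => (y - 1) * CGamma (y - 1))); [exists d'; auto|].
    assert (Hsh : is_Cderive (fun y => y - 1) (z + 1) (1 - 0))
      by (apply is_Cderive_minus; [apply is_Cderive_id | apply is_Cderive_const]).
    assert (HG1 : is_Cderive CGamma (z + 1 - 1) L) by (replace (z + 1 - 1) with z by ring; auto).
    eapply is_Cderive_ext; [intros; reflexivity | |
      exact (is_Cderive_mult _ _ _ _ _ Hsh
               (is_Cderive_comp CGamma (fun y => y - 1) (z + 1) L _ HG1 Hsh))].
    cbv beta. replace (z + 1 - 1) with z by ring. ring_C. }
  unfold digamma. rewrite (Cderiv_correct _ _ _ HD), (Cderiv_correct _ _ _ HL).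
  rewrite CGamma_plus_1 by auto. field. auto.
Qed.

(** * Beta ratios and binomial weights *)

Fixpoint rising (z : C) (j : nat) : C :=
  match j with O => 1 | S j' => rising z j' * (z + Cnat j') end.

Fixpoint recip_sum (z : C) (j : nat) : C :=
  match j with O => 0 | S j' => recip_sum z j' + / (z + Cnat j') end.

Lemma rising_neq_0 z j : not_nonpos_int z -> rising z j <> 0.
Proof.
  intros H. induction j as [|j IHj]; simpl.
  - intro E. apply RtoC_inj in E. lra.
  - apply Cmult_neq_0; auto.
Qed.

Lemma CGamma_plus_Cnat z j : not_nonpos_int z -> CGamma (z + Cnat j) = rising z j * CGamma z.
Proof.
  intros H. induction j as [|j IHj].
  - rewrite Cnat_0, Cplus_0_r. simpl. ring.
  - replace (z + Cnat (S j)) with ((z + Cnat j) + 1) by (rewrite Cnat_S; ring).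
    rewrite CGamma_plus_1, IHj by (apply not_nonpos_int_plus_Cnat; auto). simpl. ring.
Qed.

Lemma digamma_plus_Cnat z j : not_nonpos_int z -> CGamma z <> 0 ->
  digamma (z + Cnat j) = digamma z + recip_sum z j.
Proof.
  intros H HG. induction j as [|j IHj].
  - rewrite Cnat_0, Cplus_0_r. simpl. ring.
  - replace (z + Cnat (S j)) with ((z + Cnat j) + 1) by (rewrite Cnat_S; ring).
    rewrite digamma_plus_1, IHj; [simpl; ring | apply not_nonpos_int_plus_Cnat; auto |].
    rewrite CGamma_plus_Cnat by auto. apply Cmult_neq_0; auto. apply rising_neq_0; auto.
Qed.

Lemma Harm_plus_Cnat z j w : not_nonpos_int z -> CGamma z <> 0 -> w + 1 = z + Cnat j ->
  Harm w = digamma z + recip_sum z j + RtoC euler_gamma.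
Proof. intros Hz HG E. unfold Harm. rewrite E, digamma_plus_Cnat; auto. Qed.

(* Up to the factor [Gamma s Gamma a / Gamma b], this is the beta integral
   [B (s + k, a + m)] when [b = a + s]. *)
Definition beta_ratio (s a b : C) (k m : nat) : C :=
  rising s k * rising a m / rising b (k + m).

Definition beta_ratio_harm (s a b : C) (k m : nat) : C :=
  beta_ratio s a b k m * (recip_sum a m - recip_sum b (k + m)).

Lemma bernstein_rec_beta_ratio s a b : a = b - s -> not_nonpos_int b ->
  bernstein_rec (beta_ratio s a b).
Proof.
  intros -> Hb k m. unfold beta_ratio. rewrite Nat.add_succ_r. simpl rising.
  rewrite Cnat_plus. pose proof (Hb (k + m)%nat) as Hkm. rewrite Cnat_plus in Hkm.
  field. split; auto. apply rising_neq_0; auto.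
Qed.

Lemma bernstein_rec_beta_ratio_harm s a b : a = b - s -> not_nonpos_int b -> not_nonpos_int a ->
  bernstein_rec (beta_ratio_harm s a b).
Proof.
  intros -> Hb Ha k m. unfold beta_ratio_harm, beta_ratio.
  rewrite Nat.add_succ_r. simpl rising. simpl recip_sum. simpl (S k + m)%nat.
  simpl recip_sum.
  rewrite Cnat_plus. pose proof (Hb (k + m)%nat) as Hkm. rewrite Cnat_plus in Hkm.
  field. repeat split; auto. apply rising_neq_0; auto.
Qed.

Definition inv_binom_weight (r s : C) (k m : nat) : C :=
  / ((Cnat k + s) * Cbinom (Cnat (k + m) + r) (Cnat k + s)).

Definition harm_binom_weight (r s : C) (k m : nat) : C :=
  (Harm (Cnat m + (r - s)) - Harm (Cnat (k + m) + r)) * inv_binom_weight r s k m.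

Section BinomWeights.

Variables r s : C.
Hypothesis Hs : not_nonpos_int s.
Hypothesis Hr1 : not_nonpos_int (r + 1).
Hypothesis Hrs1 : not_nonpos_int (r - s + 1).

Let gamma_factor := CGamma s * CGamma (r - s + 1) / CGamma (r + 1).

Lemma inv_binom_weight_beta k m :
  inv_binom_weight r s k m = gamma_factor * beta_ratio s (r - s + 1) (r + 1) k m.
Proof.
  unfold inv_binom_weight, Cbinom, gamma_factor, beta_ratio.
  replace (Cnat (k + m) + r + 1) with ((r + 1) + Cnat (k + m)) by ring.
  replace (Cnat k + s + 1) with (s + Cnat (S k)) by (rewrite Cnat_S; ring).
  replace (Cnat (k + m) + r - (Cnat k + s) + 1) with ((r - s + 1) + Cnat m)
    by (rewrite Cnat_plus; ring).
  rewrite !CGamma_plus_Cnat by auto. simpl rising.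
  replace (Cnat k + s) with (s + Cnat k) by ring.
  pose proof (Hs k). pose proof (rising_neq_0 _ (k + m) Hr1).
  unfold Cdiv. rewrite !Cinv_mult, !Cinv_inv.
  (* [Gamma (r + 1)] may vanish, so its inverse is kept as an atom. *)
  generalize (/ CGamma (r + 1)). intros c. field. auto.
Qed.

Lemma bernstein_rec_inv_binom_weight : bernstein_rec (inv_binom_weight r s).
Proof.
  intros k m. rewrite !inv_binom_weight_beta.
  rewrite (bernstein_rec_beta_ratio s (r - s + 1) (r + 1)) by (auto; ring). ring.
Qed.

Lemma harm_binom_weight_beta k m :
  CGamma (r - s + 1) <> 0 -> CGamma (r + 1) <> 0 ->
  harm_binom_weight r s k m = gamma_factor *
    ((digamma (r - s + 1) - digamma (r + 1)) * beta_ratio s (r - s + 1) (r + 1) k m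
     + beta_ratio_harm s (r - s + 1) (r + 1) k m).
Proof.
  intros Ha Hb. unfold harm_binom_weight, beta_ratio_harm.
  rewrite (Harm_plus_Cnat (r - s + 1) m) by (auto; ring).
  rewrite (Harm_plus_Cnat (r + 1) (k + m)) by (auto; ring).
  rewrite inv_binom_weight_beta. ring.
Qed.

(* If [gamma_factor] vanishes, so does every weight, and the recurrence is trivial. *)
Lemma bernstein_rec_harm_binom_weight : bernstein_rec (harm_binom_weight r s).
Proof.
  destruct (Ceq_dec gamma_factor 0) as [H0|H0].
  - intros k m. unfold harm_binom_weight. rewrite !inv_binom_weight_beta, H0. ring.
  - assert (Ha : CGamma (r - s + 1) <> 0)
      by (intro E; apply H0; unfold gamma_factor; rewrite E; unfold Cdiv; ring).
    assert (Hb : CGamma (r + 1) <> 0)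
      by (intro E; apply H0; unfold gamma_factor, Cdiv; rewrite E, Cinv_0; ring).
    intros k m. rewrite !harm_binom_weight_beta by auto.
    rewrite (bernstein_rec_beta_ratio s (r - s + 1) (r + 1)),
            (bernstein_rec_beta_ratio_harm s (r - s + 1) (r + 1)) by (auto; ring).
    ring.
Qed.

End BinomWeights.

Theorem lemma6 (n l1 u1 l2 u2 : nat) (f g : nat -> C)
  (Hu1 : (u1 <= n)%nat)
  (Hid : forall t : C,
     sum_n_m (fun k => Cmult (Cmult (f k) (@pow_n C_Ring t k))
                             (@pow_n C_Ring (Cminus (RtoC 1) t) (n - k))) l1 u1
     = sum_n_m (fun k => Cmult (g k) (@pow_n C_Ring t k)) l2 u2)
  (r s : C) (Hr : not_neg_int r) (Hs : not_neg_int s) (Hs0 : s <> RtoC 0)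
  (Hrs : not_neg_int (Cminus r s)) :
  sum_n_m (fun k => Cdiv (f k)
             (Cmult (Cplus (Cnat k) s) (Cbinom (Cplus (Cnat n) r) (Cplus (Cnat k) s)))) l1 u1
  = sum_n_m (fun k => Cdiv (g k)
             (Cmult (Cplus (Cnat k) s) (Cbinom (Cplus (Cnat k) r) (Cplus (Cnat k) s)))) l2 u2
  /\
  sum_n_m (fun k => Cmult (f k)
             (Cdiv (Cminus (Harm (Cplus (Cnat (n - k)) (Cminus r s))) (Harm (Cplus (Cnat n) r)))
                   (Cmult (Cplus (Cnat k) s) (Cbinom (Cplus (Cnat n) r) (Cplus (Cnat k) s))))) l1 u1
  = sum_n_m (fun k => Cmult (g k)
             (Cdiv (Cminus (Harm (Cminus r s)) (Harm (Cplus (Cnat k) r)))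
                   (Cmult (Cplus (Cnat k) s) (Cbinom (Cplus (Cnat k) r) (Cplus (Cnat k) s))))) l2 u2.
Proof.
  pose proof (not_nonpos_int_of_not_neg_int s Hs Hs0).
  pose proof (not_nonpos_int_succ_of_not_neg_int r Hr).
  pose proof (not_nonpos_int_succ_of_not_neg_int _ Hrs).
  split.
  - rewrite (sum_n_m_ext_loc _ (fun k => f k * inv_binom_weight r s k (n - k)) l1 u1),
            (sum_n_m_ext _ (fun k => g k * inv_binom_weight r s k 0) l2 u2).
    + apply bernstein_transfer; auto. apply bernstein_rec_inv_binom_weight; auto.
    + intros k. unfold inv_binom_weight. rewrite Nat.add_0_r. reflexivity.
    + intros k Hk. unfold inv_binom_weight. replace (k + (n - k))%nat with n by lia.
      reflexivity.
  - rewrite (sum_n_m_ext_loc _ (fun k => f k * harm_binom_weight r s k (n - k)) l1 u1),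
            (sum_n_m_ext _ (fun k => g k * harm_binom_weight r s k 0) l2 u2).
    + apply bernstein_transfer; auto. apply bernstein_rec_harm_binom_weight; auto.
    + intros k. unfold harm_binom_weight, inv_binom_weight, Cdiv.
      rewrite Nat.add_0_r, Cnat_0, Cplus_0_l. ring_C.
    + intros k Hk. unfold harm_binom_weight, inv_binom_weight, Cdiv.
      replace (k + (n - k))%nat with n by lia. ring_C.
Qed.
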